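(* Let $\varphi:A\to B$ be a continuous unital algebra homomorphism between unital Banach algebras which admits a continuous linear section $s:B\to A$, $\varphi\circ s=1_B$. Then for every $n\ge1$ the induced group homomorphism $\varphi(\Delta):GL(C^2_0(\Delta^n,A))\to GL(C^2_0(\Delta^n,B))$, $\sigma\mapsto\varphi\circ\sigma$, is surjective.
   Context: $\Delta^n=\{t\in[0,1]^n:\sum t_i\le1\}$, $\mathbf 0$ its origin vertex; $C^2(\Delta^n,A)$ the Banach algebra of $C^2$ maps $\Delta^n\to A$ (norm: sup norm plus sup norms of first and second partial derivatives); for a unital ring $R$, $GL(R)=\bigcup_mGL_m(R)$; $GL(C^2_0(\Delta^n,A))=\{\sigma\in GL(C^2(\Delta^n,A)):\sigma(\mathbf 0)=1\}$. *)

From Stdlib Require Import Reals Lra Lia.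
Open Scope R_scope.

Record BanachAlgebra := {
  carrier :> Type;
  bzero : carrier;
  bone : carrier;
  badd : carrier -> carrier -> carrier;
  bopp : carrier -> carrier;
  bmul : carrier -> carrier -> carrier;
  bscal : R -> carrier -> carrier;
  bnorm : carrier -> R;
  badd_assoc : forall x y z, badd x (badd y z) = badd (badd x y) z;
  badd_comm : forall x y, badd x y = badd y x;
  badd_0 : forall x, badd x bzero = x;
  badd_opp : forall x, badd x (bopp x) = bzero;
  bscal_1 : forall x, bscal 1 x = x;
  bscal_assoc : forall a b x, bscal a (bscal b x) = bscal (a * b) x;
  bscal_distr_l : forall a b x, bscal (a + b) x = badd (bscal a x) (bscal b x);
  bscal_distr_r : forall a x y, bscal a (badd x y) = badd (bscal a x) (bscal a y);
  bmul_assoc : forall x y z, bmul x (bmul y z) = bmul (bmul x y) z;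
  bmul_1_l : forall x, bmul bone x = x;
  bmul_1_r : forall x, bmul x bone = x;
  bmul_distr_l : forall x y z, bmul x (badd y z) = badd (bmul x y) (bmul x z);
  bmul_distr_r : forall x y z, bmul (badd x y) z = badd (bmul x z) (bmul y z);
  bmul_scal_l : forall a x y, bmul (bscal a x) y = bscal a (bmul x y);
  bmul_scal_r : forall a x y, bmul x (bscal a y) = bscal a (bmul x y);
  bnorm_pos : forall x, 0 <= bnorm x;
  bnorm_eq0 : forall x, bnorm x = 0 -> x = bzero;
  bnorm_triang : forall x y, bnorm (badd x y) <= bnorm x + bnorm y;
  bnorm_scal : forall a x, bnorm (bscal a x) = Rabs a * bnorm x;
  bnorm_mul : forall x y, bnorm (bmul x y) <= bnorm x * bnorm y;
  bcomplete : forall u : nat -> carrier,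
    (forall eps, eps > 0 -> exists N, forall p q, (N <= p)%nat -> (N <= q)%nat ->
        bnorm (badd (u p) (bopp (u q))) < eps) ->
    exists l, forall eps, eps > 0 -> exists N, forall p, (N <= p)%nat ->
        bnorm (badd (u p) (bopp l)) < eps
}.

Arguments bzero {_}. Arguments bone {_}. Arguments badd {_}. Arguments bopp {_}.
Arguments bmul {_}. Arguments bscal {_}. Arguments bnorm {_}.

Definition bsub {A : BanachAlgebra} (x y : A) : A := badd x (bopp y).

Definition bcontinuous {A B : BanachAlgebra} (f : A -> B) : Prop :=
  forall x eps, eps > 0 -> exists delta, delta > 0 /\
    forall y, bnorm (bsub y x) < delta -> bnorm (bsub (f y) (f x)) < eps.

Definition blinear {A B : BanachAlgebra} (f : A -> B) : Prop :=
  (forall x y, f (badd x y) = badd (f x) (f y)) /\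
  (forall a x, f (bscal a x) = bscal a (f x)).

Definition unital_alg_hom {A B : BanachAlgebra} (f : A -> B) : Prop :=
  blinear f /\ (forall x y, f (bmul x y) = bmul (f x) (f y)) /\ f bone = bone.

(** Points of R^n are represented as t : nat -> R with t i = 0 for i >= n. *)
Fixpoint Rsum (f : nat -> R) (n : nat) : R :=
  match n with O => 0 | S k => Rsum f k + f k end.

Fixpoint asum {A : BanachAlgebra} (f : nat -> A) (n : nat) : A :=
  match n with O => bzero | S k => badd (asum f k) (f k) end.

Definition in_simplex (n : nat) (t : nat -> R) : Prop :=
  (forall i, (i < n)%nat -> 0 <= t i) /\ Rsum t n <= 1 /\
  (forall i, (n <= i)%nat -> t i = 0).

Definition origin : nat -> R := fun _ => 0.

Definition dist_n (n : nat) (t u : nat -> R) : R := Rsum (fun i => Rabs (t i - u i)) n.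

Definition shift (i : nat) (h : R) (t : nat -> R) : nat -> R :=
  fun k => if Nat.eqb k i then t k + h else t k.

Definition cont_on_simplex {A : BanachAlgebra} (n : nat) (f : (nat -> R) -> A) : Prop :=
  forall t, in_simplex n t -> forall eps, eps > 0 -> exists delta, delta > 0 /\
    forall u, in_simplex n u -> dist_n n u t < delta -> bnorm (bsub (f u) (f t)) < eps.

Definition is_partial {A : BanachAlgebra} (n i : nat) (f D : (nat -> R) -> A) : Prop :=
  forall t, in_simplex n t -> forall eps, eps > 0 -> exists delta, delta > 0 /\
    forall h, h <> 0 -> Rabs h < delta -> in_simplex n (shift i h t) ->
      bnorm (bsub (bscal (/ h) (bsub (f (shift i h t)) (f t))) (D t)) < eps.

Definition C2_on_simplex {A : BanachAlgebra} (n : nat) (f : (nat -> R) -> A) : Prop :=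
  exists (D1 : nat -> (nat -> R) -> A) (D2 : nat -> nat -> (nat -> R) -> A),
    cont_on_simplex n f /\
    (forall i, (i < n)%nat -> is_partial n i f (D1 i) /\ cont_on_simplex n (D1 i)) /\
    (forall i j, (i < n)%nat -> (j < n)%nat ->
        is_partial n i (D1 j) (D2 i j) /\ cont_on_simplex n (D2 i j)).

(** m x m matrices over C^2(Delta^n, A): entries indexed by i, j < m. *)
Definition fmat (A : BanachAlgebra) := nat -> nat -> (nat -> R) -> A.

Definition idmat {A : BanachAlgebra} : fmat A :=
  fun i j _ => if Nat.eqb i j then bone else bzero.

Definition mat_mul {A : BanachAlgebra} (m : nat) (X Y : fmat A) : fmat A :=
  fun i j t => asum (fun k => bmul (X i k t) (Y k j t)) m.

Definition mat_eq {A : BanachAlgebra} (n m : nat) (X Y : fmat A) : Prop :=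
  forall i j t, (i < m)%nat -> (j < m)%nat -> in_simplex n t -> X i j t = Y i j t.

(** sigma in GL_m(C^2_0(Delta^n, A)): invertible matrix over C^2(Delta^n,A)
    with sigma(0) = 1. *)
Definition in_GL0 (A : BanachAlgebra) (n m : nat) (X : fmat A) : Prop :=
  (forall i j, (i < m)%nat -> (j < m)%nat -> C2_on_simplex n (X i j)) /\
  (exists Y : fmat A,
     (forall i j, (i < m)%nat -> (j < m)%nat -> C2_on_simplex n (Y i j)) /\
     mat_eq n m (mat_mul m X Y) idmat /\ mat_eq n m (mat_mul m Y X) idmat) /\
  (forall i j, (i < m)%nat -> (j < m)%nat -> X i j origin = idmat i j origin).

(** Stabilisation GL_m -> GL_k (k >= m): X |-> diag(X, 1). *)
Definition stab {A : BanachAlgebra} (m : nat) (X : fmat A) : fmat A :=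
  fun i j t => if andb (Nat.ltb i m) (Nat.ltb j m) then X i j t else idmat i j t.

Definition map_fmat {A B : BanachAlgebra} (f : A -> B) (X : fmat A) : fmat B :=
  fun i j t => f (X i j t).

From Stdlib Require Import Reals Lra Lia Classical ClassicalEpsilon FunctionalExtensionality ProofIrrelevance Rtopology.
Open Scope R_scope.

(** An element tau of GL_m(C^2_0(Delta^n, B)) is the same thing as a unit T
    of the algebra C^2(Delta^n, M_m(B)) with T(0) = 1, and phi acts entrywise as a unital
    homomorphism M_m(A) -> M_m(B) with the entrywise section.  So it suffices to lift units of
    C^2(Delta^n, B) equal to 1 at the origin, for an arbitrary such pair (phi, s)
    ([lift_C2_unit]).  By uniform continuity of T on the compact simplex, choose N so large that
    the factors g_k(t) = T((k+1)/N t) T(k/N t)^-1 (k < N), whose telescoping product is T(t), are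
    uniformly close to 1.  Then the lifts h_k = 1 + s(g_k - 1) are within 1/2 of 1, hence
    invertible by the Neumann series with uniformly bounded inverses, so they are units of
    C^2(Delta^n, A); their product lifts T and is 1 at the origin. *)

Arguments badd_assoc {_}. Arguments badd_comm {_}. Arguments badd_0 {_}. Arguments badd_opp {_}.
Arguments bscal_1 {_}. Arguments bscal_assoc {_}. Arguments bscal_distr_l {_}. Arguments bscal_distr_r {_}.
Arguments bmul_assoc {_}. Arguments bmul_1_l {_}. Arguments bmul_1_r {_}. Arguments bmul_distr_l {_}.
Arguments bmul_distr_r {_}. Arguments bmul_scal_l {_}. Arguments bmul_scal_r {_}.
Arguments bnorm_pos {_}. Arguments bnorm_eq0 {_}. Arguments bnorm_triang {_}. Arguments bnorm_scal {_}.
Arguments bnorm_mul {_}.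

Lemma badd_0_l {X : BanachAlgebra} (x : X) : badd bzero x = x.
Proof. rewrite badd_comm; apply badd_0. Qed.

Lemma badd_opp_l {X : BanachAlgebra} (x : X) : badd (bopp x) x = bzero.
Proof. rewrite badd_comm; apply badd_opp. Qed.

Lemma badd_cancel_l {X : BanachAlgebra} (a x y : X) : badd a x = badd a y -> x = y.
Proof.
  intro H. transitivity (badd (bopp a) (badd a x)).
  - rewrite badd_assoc, badd_opp_l, badd_0_l. reflexivity.
  - rewrite H, badd_assoc, badd_opp_l, badd_0_l. reflexivity.
Qed.

Lemma opp_unique {X : BanachAlgebra} (x y : X) : badd x y = bzero -> y = bopp x.
Proof. intro H. apply (badd_cancel_l x). rewrite H, badd_opp. reflexivity. Qed.

Lemma bopp_opp {X : BanachAlgebra} (x : X) : bopp (bopp x) = x.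
Proof. symmetry. apply opp_unique. apply badd_opp_l. Qed.

Lemma bopp_0 {X : BanachAlgebra} : bopp (@bzero X) = bzero.
Proof. symmetry. apply opp_unique. apply badd_0. Qed.

Lemma bopp_add {X : BanachAlgebra} (x y : X) : bopp (badd x y) = badd (bopp x) (bopp y).
Proof.
  symmetry. apply opp_unique.
  rewrite (badd_comm (bopp x) (bopp y)), badd_assoc, <- (badd_assoc x y (bopp y)), badd_opp, badd_0, badd_opp.
  reflexivity.
Qed.

Lemma bmul_0_r {X : BanachAlgebra} (x : X) : bmul x bzero = bzero.
Proof.
  apply (badd_cancel_l (bmul x bzero)). rewrite <- bmul_distr_l, !badd_0. reflexivity.
Qed.

Lemma bmul_0_l {X : BanachAlgebra} (x : X) : bmul bzero x = bzero.
Proof.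
  apply (badd_cancel_l (bmul bzero x)). rewrite <- bmul_distr_r, !badd_0. reflexivity.
Qed.

Lemma bmul_opp_l {X : BanachAlgebra} (x y : X) : bmul (bopp x) y = bopp (bmul x y).
Proof. apply opp_unique. rewrite <- bmul_distr_r, badd_opp, bmul_0_l. reflexivity. Qed.

Lemma bmul_opp_r {X : BanachAlgebra} (x y : X) : bmul x (bopp y) = bopp (bmul x y).
Proof. apply opp_unique. rewrite <- bmul_distr_l, badd_opp, bmul_0_r. reflexivity. Qed.

Lemma bscal_0 {X : BanachAlgebra} (x : X) : bscal 0 x = bzero.
Proof.
  apply (badd_cancel_l (bscal 0 x)). rewrite <- bscal_distr_l, Rplus_0_r, badd_0. reflexivity.
Qed.

Lemma bscal_0_r {X : BanachAlgebra} (a : R) : bscal a (@bzero X) = bzero.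
Proof.
  apply (badd_cancel_l (bscal a bzero)). rewrite <- bscal_distr_r, !badd_0. reflexivity.
Qed.

Lemma bscal_opp1 {X : BanachAlgebra} (x : X) : bscal (-1) x = bopp x.
Proof.
  apply opp_unique. rewrite <- (bscal_1 x) at 1. rewrite <- bscal_distr_l.
  replace (1 + -1) with 0 by ring. apply bscal_0.
Qed.

Lemma bscal_opp {X : BanachAlgebra} (a : R) (x : X) : bscal a (bopp x) = bopp (bscal a x).
Proof. rewrite <- !bscal_opp1, !bscal_assoc. f_equal. ring. Qed.

Lemma bnorm_0 {X : BanachAlgebra} : bnorm (@bzero X) = 0.
Proof.
  rewrite <- (bscal_0 (@bzero X)), bnorm_scal, Rabs_R0. ring.
Qed.

Lemma bnorm_opp {X : BanachAlgebra} (x : X) : bnorm (bopp x) = bnorm x.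
Proof. rewrite <- bscal_opp1, bnorm_scal, Rabs_left by lra. ring. Qed.

Lemma bsub_add_cancel {X : BanachAlgebra} (x y : X) : badd (bsub x y) y = x.
Proof. unfold bsub. rewrite <- badd_assoc, badd_opp_l, badd_0. reflexivity. Qed.

Lemma bsub_self {X : BanachAlgebra} (x : X) : bsub x x = bzero.
Proof. apply badd_opp. Qed.

Lemma bsub_0_r {X : BanachAlgebra} (x : X) : bsub x bzero = x.
Proof. unfold bsub. rewrite bopp_0. apply badd_0. Qed.

Lemma bsub_opp {X : BanachAlgebra} (x y : X) : bopp (bsub x y) = bsub y x.
Proof. unfold bsub. rewrite bopp_add, bopp_opp, badd_comm. reflexivity. Qed.

Lemma bnorm_sub_sym {X : BanachAlgebra} (x y : X) : bnorm (bsub x y) = bnorm (bsub y x).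
Proof. rewrite <- bsub_opp, bnorm_opp. reflexivity. Qed.

Lemma bsub_chain {X : BanachAlgebra} (x y z : X) : bsub x z = badd (bsub x y) (bsub y z).
Proof.
  unfold bsub. rewrite badd_assoc. f_equal. rewrite <- badd_assoc, badd_opp_l, badd_0. reflexivity.
Qed.

Lemma bnorm_sub_triang {X : BanachAlgebra} (x y z : X) :
  bnorm (bsub x z) <= bnorm (bsub x y) + bnorm (bsub y z).
Proof. rewrite (bsub_chain x y z). apply bnorm_triang. Qed.

Lemma bnorm_add_le {X : BanachAlgebra} (x y : X) : bnorm x <= bnorm (bsub x y) + bnorm y.
Proof. rewrite <- (bsub_add_cancel x y) at 1. apply bnorm_triang. Qed.

Lemma bsub_add_add {X : BanachAlgebra} (a b c d : X) :
  bsub (badd a b) (badd c d) = badd (bsub a c) (bsub b d).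
Proof.
  unfold bsub. rewrite bopp_add. rewrite <- !badd_assoc. f_equal.
  rewrite !badd_assoc. f_equal. apply badd_comm.
Qed.

Lemma bmul_sub_l {X : BanachAlgebra} (a b c : X) : bmul (bsub a b) c = bsub (bmul a c) (bmul b c).
Proof. unfold bsub. rewrite bmul_distr_r, bmul_opp_l. reflexivity. Qed.

Lemma bmul_sub_r {X : BanachAlgebra} (a b c : X) : bmul c (bsub a b) = bsub (bmul c a) (bmul c b).
Proof. unfold bsub. rewrite bmul_distr_l, bmul_opp_r. reflexivity. Qed.

(* x y - z w = (x - z) y + z (y - w): the identity behind every product rule. *)
Lemma bmul_diff {X : BanachAlgebra} (a b c d : X) :
  bsub (bmul a b) (bmul c d) = badd (bmul (bsub a c) b) (bmul c (bsub b d)).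
Proof.
  rewrite bmul_sub_l, bmul_sub_r. rewrite <- bsub_chain. reflexivity.
Qed.

Lemma bsub_eq0 {X : BanachAlgebra} (x y : X) : bsub x y = bzero -> x = y.
Proof. intro H. rewrite <- (bsub_add_cancel x y), H, badd_0_l. reflexivity. Qed.

Lemma bnorm_small_eq {X : BanachAlgebra} (x y : X) : (forall e, e > 0 -> bnorm (bsub x y) < e) -> x = y.
Proof.
  intro H. apply bsub_eq0, bnorm_eq0.
  pose proof (bnorm_pos (bsub x y)).
  destruct (Rle_lt_or_eq_dec _ _ H0) as [h|h]; [|auto].
  specialize (H _ h). lra.
Qed.

Lemma bsub_sub_cancel {X : BanachAlgebra} (x y : X) : bsub x (bsub x y) = y.
Proof. unfold bsub. rewrite bopp_add, bopp_opp, badd_assoc, badd_opp, badd_0_l. reflexivity. Qed.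

Lemma blinear_0 {X Y : BanachAlgebra} (f : X -> Y) : blinear f -> f bzero = bzero.
Proof.
  intros [Ha _]. apply (badd_cancel_l (f bzero)). rewrite <- Ha, !badd_0. reflexivity.
Qed.

Lemma blinear_opp {X Y : BanachAlgebra} (f : X -> Y) : blinear f -> forall x, f (bopp x) = bopp (f x).
Proof.
  intros H x. apply opp_unique. destruct H as [Ha Hs]. rewrite <- Ha, badd_opp. apply blinear_0; split; auto.
Qed.

Lemma blinear_sub {X Y : BanachAlgebra} (f : X -> Y) : blinear f -> forall x y, f (bsub x y) = bsub (f x) (f y).
Proof. intros H x y. unfold bsub. rewrite (proj1 H), (blinear_opp f H). reflexivity. Qed.

Definition bbounded {X Y : BanachAlgebra} (f : X -> Y) : Prop :=
  blinear f /\ exists C, C > 0 /\ forall x, bnorm (f x) <= C * bnorm x.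

(* A continuous linear map is bounded (continuity at 0 with eps = 1). *)
Lemma cont_lin_bounded {X Y : BanachAlgebra} (f : X -> Y) :
  blinear f -> bcontinuous f -> bbounded f.
Proof.
  intros Hl Hc. split; auto.
  destruct (Hc bzero 1 Rlt_0_1) as [d [Hd Hd']].
  exists (2 / d). split. { apply Rdiv_lt_0_compat; lra. }
  intro x. pose proof (bnorm_pos x) as Hx.
  destruct (Rle_lt_or_eq_dec _ _ Hx) as [Hp|H0].
  - set (r := d / (2 * bnorm x)).
    assert (Hr : r > 0) by (unfold r; apply Rdiv_lt_0_compat; lra).
    assert (H1 : bnorm (bsub (bscal r x) bzero) < d).
    { rewrite bsub_0_r, bnorm_scal, Rabs_pos_eq by lra. unfold r.
      field_simplify; lra. }
    specialize (Hd' _ H1). rewrite (blinear_0 f Hl), bsub_0_r in Hd'.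
    destruct Hl as [_ Hs]. rewrite Hs, bnorm_scal, Rabs_pos_eq in Hd' by lra.
    unfold r in Hd'.
    assert (bnorm (f x) * d < 2 * bnorm x).
    { apply (Rmult_lt_compat_r (2 * bnorm x)) in Hd'; [|lra].
      field_simplify in Hd'; lra. }
    apply (Rmult_le_reg_r d); [lra|]. field_simplify; lra.
  - rewrite <- H0. symmetry in H0. apply bnorm_eq0 in H0 as ->.
    rewrite (blinear_0 f Hl), bnorm_0. lra.
Qed.

Lemma bbounded_scal {X : BanachAlgebra} (c : R) : bbounded (fun x : X => bscal c x).
Proof.
  split; [split|].
  - intros. apply bscal_distr_r.
  - intros. rewrite !bscal_assoc. f_equal. ring.
  - exists (Rabs c + 1). split; [pose proof (Rabs_pos c); lra|].
    intro x. rewrite bnorm_scal. pose proof (bnorm_pos x). nra.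
Qed.

Lemma bbounded_opp {X : BanachAlgebra} : bbounded (fun x : X => bopp x).
Proof.
  pose proof (bbounded_scal (X:=X) (-1)) as [[H1 H2] H3]. split; [split|].
  - intros. rewrite <- !bscal_opp1. apply H1.
  - intros. rewrite <- !bscal_opp1. apply H2.
  - destruct H3 as [C [HC H]]. exists C. split; auto. intro x. rewrite <- bscal_opp1. apply H.
Qed.

Lemma bbounded_mul_l {X : BanachAlgebra} (a : X) : bbounded (fun x => bmul a x).
Proof.
  split; [split|].
  - intros. apply bmul_distr_l.
  - intros. apply bmul_scal_r.
  - exists (bnorm a + 1). split; [pose proof (bnorm_pos a); lra|].
    intro x. eapply Rle_trans; [apply bnorm_mul|]. pose proof (bnorm_pos x). nra.
Qed.

Lemma bbounded_mul_r {X : BanachAlgebra} (a : X) : bbounded (fun x => bmul x a).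
Proof.
  split; [split|].
  - intros. apply bmul_distr_r.
  - intros. apply bmul_scal_l.
  - exists (bnorm a + 1). split; [pose proof (bnorm_pos a); lra|].
    intro x. eapply Rle_trans; [apply bnorm_mul|]. pose proof (bnorm_pos x). nra.
Qed.

(** * An abstract calculus of limits

    Limits of continuity and of difference quotients are both instances of one notion: [F]
    tends to [l] along a family of "neighbourhoods" [Q d] (d > 0) shrinking as d decreases. *)

Definition conv {I : Type} {X : BanachAlgebra} (Q : R -> I -> Prop) (F : I -> X) (l : X) : Prop :=
  forall eps, eps > 0 -> exists d, d > 0 /\ forall x, Q d x -> bnorm (bsub (F x) l) < eps.

Definition Qmono {I : Type} (Q : R -> I -> Prop) : Prop :=
  forall d d' x, d <= d' -> Q d x -> Q d' x.

Lemma ev_and {I : Type} (Q : R -> I -> Prop) (P1 P2 : I -> Prop) :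
  Qmono Q -> (exists d, d > 0 /\ forall x, Q d x -> P1 x) ->
  (exists d, d > 0 /\ forall x, Q d x -> P2 x) ->
  exists d, d > 0 /\ forall x, Q d x -> P1 x /\ P2 x.
Proof.
  intros HQ [d1 [H1 H1']] [d2 [H2 H2']]. exists (Rmin d1 d2). split.
  - apply Rmin_Rgt_r; auto.
  - intros x Hx. split.
    + apply H1'. eapply HQ; [|exact Hx]. apply Rmin_l.
    + apply H2'. eapply HQ; [|exact Hx]. apply Rmin_r.
Qed.

Lemma conv_const {I : Type} {X : BanachAlgebra} (Q : R -> I -> Prop) (c : X) :
  conv Q (fun _ => c) c.
Proof. intros e He. exists 1. split; [lra|]. intros. rewrite bsub_self, bnorm_0. lra. Qed.

Lemma conv_add {I : Type} {X : BanachAlgebra} (Q : R -> I -> Prop) (F G : I -> X) a b :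
  Qmono Q -> conv Q F a -> conv Q G b -> conv Q (fun x => badd (F x) (G x)) (badd a b).
Proof.
  intros HQ HF HG e He.
  destruct (ev_and Q _ _ HQ (HF (e/2) ltac:(lra)) (HG (e/2) ltac:(lra))) as [d [Hd H]].
  exists d. split; auto. intros x Hx. destruct (H x Hx).
  rewrite bsub_add_add. eapply Rle_lt_trans; [apply bnorm_triang|]. lra.
Qed.

Lemma conv_lin {I : Type} {X Y : BanachAlgebra} (Q : R -> I -> Prop) (L : X -> Y) (F : I -> X) a :
  bbounded L -> conv Q F a -> conv Q (fun x => L (F x)) (L a).
Proof.
  intros [Hl [C [HC HCb]]] HF e He.
  destruct (HF (e / C)) as [d [Hd H]]. { apply Rdiv_lt_0_compat; lra. }
  exists d. split; auto. intros x Hx. rewrite <- (blinear_sub L Hl).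
  eapply Rle_lt_trans; [apply HCb|]. specialize (H x Hx).
  apply (Rmult_lt_compat_l C) in H; [|lra]. field_simplify in H; lra.
Qed.

Lemma conv_bound {I : Type} {X : BanachAlgebra} (Q : R -> I -> Prop) (F : I -> X) a :
  conv Q F a -> exists d, d > 0 /\ forall x, Q d x -> bnorm (F x) <= bnorm a + 1.
Proof.
  intros HF. destruct (HF 1 Rlt_0_1) as [d [Hd H]]. exists d. split; auto.
  intros x Hx. specialize (H x Hx). pose proof (bnorm_add_le (F x) a). lra.
Qed.

Lemma conv_mul {I : Type} {X : BanachAlgebra} (Q : R -> I -> Prop) (F G : I -> X) a b :
  Qmono Q -> conv Q F a -> conv Q G b -> conv Q (fun x => bmul (F x) (G x)) (bmul a b).
Proof.
  intros HQ HF HG e He.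
  set (Mb := bnorm b + 1). set (Ma := bnorm a + 1).
  assert (HMb : Mb > 0) by (unfold Mb; pose proof (bnorm_pos b); lra).
  assert (HMa : Ma > 0) by (unfold Ma; pose proof (bnorm_pos a); lra).
  destruct (ev_and Q _ _ HQ (conv_bound Q G b HG) (HF (e / (2 * Mb)) ltac:(apply Rdiv_lt_0_compat; lra)))
    as [d1 [Hd1 H1]].
  destruct (ev_and Q _ _ HQ (ex_intro _ d1 (conj Hd1 H1)) (HG (e / (2 * Ma)) ltac:(apply Rdiv_lt_0_compat; lra)))
    as [d [Hd H]].
  exists d. split; auto. intros x Hx. destruct (H x Hx) as [[Hb Hf] Hg].
  rewrite bmul_diff. eapply Rle_lt_trans; [apply bnorm_triang|].
  pose proof (bnorm_mul (bsub (F x) a) (G x)). pose proof (bnorm_mul a (bsub (G x) b)).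
  assert (Hleft : bnorm (bsub (F x) a) * bnorm (G x) < e / 2).
  { apply Rle_lt_trans with (bnorm (bsub (F x) a) * Mb).
    - apply Rmult_le_compat_l; [apply bnorm_pos|exact Hb].
    - replace (e / 2) with (e / (2 * Mb) * Mb) by (field; lra). apply Rmult_lt_compat_r; lra. }
  assert (Hright : bnorm a * bnorm (bsub (G x) b) < e / 2).
  { apply Rle_lt_trans with (Ma * bnorm (bsub (G x) b)).
    - apply Rmult_le_compat_r; [apply bnorm_pos|unfold Ma; lra].
    - replace (e / 2) with (Ma * (e / (2 * Ma))) by (field; lra). apply Rmult_lt_compat_l; lra. }
  lra.
Qed.

Lemma conv_ext {I : Type} {X : BanachAlgebra} (Q : R -> I -> Prop) (F G : I -> X) a :
  Qmono Q -> (exists d, d > 0 /\ forall x, Q d x -> F x = G x) -> conv Q F a -> conv Q G a.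
Proof.
  intros HQ Hev HF e He. destruct (ev_and Q _ _ HQ Hev (HF e He)) as [d [Hd H]].
  exists d. split; auto. intros x Hx. destruct (H x Hx) as [<- ?]. auto.
Qed.

Lemma conv_comp {I J : Type} {X : BanachAlgebra} (Q1 : R -> I -> Prop) (Q2 : R -> J -> Prop)
  (phi : I -> J) (G : J -> X) l :
  (forall d, d > 0 -> exists d', d' > 0 /\ forall x, Q1 d' x -> Q2 d (phi x)) ->
  conv Q2 G l -> conv Q1 (fun x => G (phi x)) l.
Proof.
  intros Hphi HG e He. destruct (HG e He) as [d [Hd H]].
  destruct (Hphi d Hd) as [d' [Hd' H']]. exists d'. split; auto.
Qed.

Lemma conv_dom {I : Type} {X Y : BanachAlgebra} (Q : R -> I -> Prop) (F : I -> X) (G : I -> Y) a b K :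
  K > 0 -> (forall x, bnorm (bsub (G x) b) <= K * bnorm (bsub (F x) a)) -> conv Q F a -> conv Q G b.
Proof.
  intros HK Hd HF e He. destruct (HF (e / K)) as [d [Hdd H]]. { apply Rdiv_lt_0_compat; lra. }
  exists d. split; auto. intros x Hx. specialize (H x Hx). eapply Rle_lt_trans; [apply Hd|].
  apply (Rmult_lt_compat_l K) in H; auto. field_simplify in H; lra.
Qed.

Lemma Rsum_ext (f g : nat -> R) n : (forall k, (k < n)%nat -> f k = g k) -> Rsum f n = Rsum g n.
Proof.
  induction n; simpl; auto. intro H. rewrite IHn by (intros; apply H; lia). rewrite H by lia. reflexivity.
Qed.

Lemma Rsum_le (f g : nat -> R) n : (forall k, (k < n)%nat -> f k <= g k) -> Rsum f n <= Rsum g n.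
Proof.
  induction n; simpl; [lra|]. intro H. pose proof (H n ltac:(lia)). pose proof (IHn ltac:(intros; apply H; lia)). lra.
Qed.

Lemma Rsum_zero n : Rsum (fun _ => 0) n = 0.
Proof. induction n; simpl; auto. rewrite IHn; ring. Qed.

Lemma Rsum_nonneg (f : nat -> R) n : (forall k, (k < n)%nat -> 0 <= f k) -> 0 <= Rsum f n.
Proof. intro H. rewrite <- (Rsum_zero n). apply Rsum_le; auto. Qed.

Lemma Rsum_scal (c : R) (f : nat -> R) n : Rsum (fun k => c * f k) n = c * Rsum f n.
Proof. induction n; simpl; [ring|]. rewrite IHn. ring. Qed.

Lemma Rsum_add (f g : nat -> R) n : Rsum (fun k => f k + g k) n = Rsum f n + Rsum g n.
Proof. induction n; simpl; [ring|]. rewrite IHn. ring. Qed.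

Lemma Rsum_single (f : nat -> R) i n : (forall k, k <> i -> f k = 0) ->
  Rsum f n = if Nat.ltb i n then f i else 0.
Proof.
  intro H. induction n; simpl; auto. rewrite IHn.
  destruct (Nat.lt_ge_cases i n) as [h1|h1].
  - replace (Nat.ltb i n) with true by (symmetry; apply Nat.ltb_lt; lia).
    replace (Nat.ltb i (S n)) with true by (symmetry; apply Nat.ltb_lt; lia).
    rewrite (H n) by lia. ring.
  - replace (Nat.ltb i n) with false by (symmetry; apply Nat.ltb_ge; lia).
    destruct (Nat.eq_dec i n) as [->|h2].
    + replace (Nat.ltb n (S n)) with true by (symmetry; apply Nat.ltb_lt; lia). ring.
    + replace (Nat.ltb i (S n)) with false by (symmetry; apply Nat.ltb_ge; lia).
      rewrite (H n) by lia. ring.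
Qed.

Lemma Rsum_swap (f : nat -> nat -> R) I J :
  Rsum (fun i => Rsum (fun j => f i j) J) I = Rsum (fun j => Rsum (fun i => f i j) I) J.
Proof.
  induction I; simpl.
  - symmetry. apply Rsum_zero.
  - rewrite IHI. rewrite <- Rsum_add. reflexivity.
Qed.

Lemma Rsum_term_le (f : nat -> R) i K : (forall k, (k < K)%nat -> 0 <= f k) -> (i < K)%nat -> f i <= Rsum f K.
Proof.
  induction K; intros H Hi; [lia|]. simpl.
  destruct (Nat.eq_dec i K) as [->|h].
  - pose proof (Rsum_nonneg f K ltac:(intros; apply H; lia)). lra.
  - pose proof (IHK ltac:(intros; apply H; lia) ltac:(lia)). pose proof (H K ltac:(lia)). lra.
Qed.

Lemma Rsum_scal_r (c : R) (f : nat -> R) n : Rsum f n * c = Rsum (fun k => f k * c) n.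
Proof. rewrite Rmult_comm, <- Rsum_scal. apply Rsum_ext. intros; ring. Qed.

Lemma Rsum_const (c : R) n : Rsum (fun _ => c) n = INR n * c.
Proof. induction n; [simpl; ring|]. cbn [Rsum]. rewrite IHn, S_INR. ring. Qed.

Lemma Rsum_abs_diff (f g : nat -> R) n : Rsum f n - Rsum g n <= Rsum (fun i => Rabs (f i - g i)) n.
Proof.
  induction n; simpl; [lra|]. pose proof (Rle_abs (f n - g n)). lra.
Qed.

Lemma asum_ext {X : BanachAlgebra} (f g : nat -> X) K :
  (forall k, (k < K)%nat -> f k = g k) -> asum f K = asum g K.
Proof.
  induction K; simpl; auto. intro H. rewrite IHK by (intros; apply H; lia). rewrite H by lia. reflexivity.
Qed.

Lemma asum_zero {X : BanachAlgebra} K : asum (fun _ => @bzero X) K = bzero.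
Proof. induction K; simpl; auto. rewrite IHK. apply badd_0. Qed.

Lemma asum_add {X : BanachAlgebra} (f g : nat -> X) K :
  asum (fun k => badd (f k) (g k)) K = badd (asum f K) (asum g K).
Proof.
  induction K; simpl; [rewrite badd_0; auto|]. rewrite IHK.
  rewrite <- !badd_assoc. f_equal. rewrite !badd_assoc. f_equal. apply badd_comm.
Qed.

Lemma asum_mul_l {X : BanachAlgebra} (c : X) (f : nat -> X) K :
  bmul c (asum f K) = asum (fun k => bmul c (f k)) K.
Proof. induction K; simpl; [apply bmul_0_r|]. rewrite bmul_distr_l, IHK. reflexivity. Qed.

Lemma asum_mul_r {X : BanachAlgebra} (c : X) (f : nat -> X) K :
  bmul (asum f K) c = asum (fun k => bmul (f k) c) K.
Proof. induction K; simpl; [apply bmul_0_l|]. rewrite bmul_distr_r, IHK. reflexivity. Qed.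

Lemma asum_lin {X Y : BanachAlgebra} (L : X -> Y) (f : nat -> X) K :
  blinear L -> L (asum f K) = asum (fun k => L (f k)) K.
Proof.
  intro HL. induction K; simpl; [apply blinear_0; auto|]. rewrite (proj1 HL), IHK. reflexivity.
Qed.

Lemma asum_swap {X : BanachAlgebra} (f : nat -> nat -> X) I J :
  asum (fun i => asum (fun j => f i j) J) I = asum (fun j => asum (fun i => f i j) I) J.
Proof.
  induction I; simpl.
  - symmetry. apply asum_zero.
  - rewrite IHI. rewrite <- asum_add. reflexivity.
Qed.

Lemma asum_single {X : BanachAlgebra} (f : nat -> X) i K : (forall k, k <> i -> f k = bzero) ->
  asum f K = if Nat.ltb i K then f i else bzero.
Proof.
  intro H. induction K; simpl; auto. rewrite IHK.
  destruct (Nat.lt_ge_cases i K) as [h1|h1].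
  - replace (Nat.ltb i K) with true by (symmetry; apply Nat.ltb_lt; lia).
    replace (Nat.ltb i (S K)) with true by (symmetry; apply Nat.ltb_lt; lia).
    rewrite (H K) by lia. apply badd_0.
  - replace (Nat.ltb i K) with false by (symmetry; apply Nat.ltb_ge; lia).
    destruct (Nat.eq_dec i K) as [->|h2].
    + replace (Nat.ltb K (S K)) with true by (symmetry; apply Nat.ltb_lt; lia). apply badd_0_l.
    + replace (Nat.ltb i (S K)) with false by (symmetry; apply Nat.ltb_ge; lia).
      rewrite (H K) by lia. apply badd_0.
Qed.

Lemma asum_norm {X : BanachAlgebra} (f : nat -> X) K :
  bnorm (asum f K) <= Rsum (fun k => bnorm (f k)) K.
Proof.
  induction K; simpl; [rewrite bnorm_0; lra|].
  eapply Rle_trans; [apply bnorm_triang|]. lra.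
Qed.

Lemma finite_N1 (P : nat -> nat -> Prop) K :
  (forall k N N', (N <= N')%nat -> P k N -> P k N') ->
  (forall k, (k < K)%nat -> exists N, P k N) -> exists N, forall k, (k < K)%nat -> P k N.
Proof.
  intro Hm. induction K; intro H.
  - exists O. intros; lia.
  - destruct IHK as [N1 HN1]. { intros; apply H; lia. }
    destruct (H K ltac:(lia)) as [N2 HN2]. exists (Nat.max N1 N2). intros k Hk.
    destruct (Nat.eq_dec k K) as [->|h].
    + eapply Hm; [|exact HN2]. lia.
    + eapply Hm; [|apply HN1; lia]. lia.
Qed.

Lemma finite_N2 (P : nat -> nat -> nat -> Prop) m :
  (forall i j N N', (N <= N')%nat -> P i j N -> P i j N') ->
  (forall i j, (i < m)%nat -> (j < m)%nat -> exists N, P i j N) ->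
  exists N, forall i j, (i < m)%nat -> (j < m)%nat -> P i j N.
Proof.
  intros Hm H.
  destruct (finite_N1 (fun i N => forall j, (j < m)%nat -> P i j N) m) as [N HN].
  - intros k N N' HN Hk j Hj. eapply Hm; eauto.
  - intros i Hi. apply finite_N1; auto. intros; eapply Hm; eauto.
  - exists N. auto.
Qed.

(** [sc c t] is the point c t; for 0 <= c <= 1 it stays in the simplex, and c |-> c t is the
    ray from the origin to t used to cut a function into small steps. *)

Definition sc (c : R) (t : nat -> R) : nat -> R := fun k => c * t k.

Lemma in_simplex_sc n c t : 0 <= c <= 1 -> in_simplex n t -> in_simplex n (sc c t).
Proof.
  intros Hc [H1 [H2 H3]]. unfold sc. split; [|split].
  - intros. pose proof (H1 i H). nra.
  - rewrite Rsum_scal. assert (0 <= Rsum t n) by (apply Rsum_nonneg; auto). nra.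
  - intros. rewrite H3 by auto. ring.
Qed.

Lemma in_simplex_origin n : in_simplex n origin.
Proof.
  unfold origin. split; [|split]; intros; try lra. rewrite Rsum_zero. lra.
Qed.

Lemma sc_0 t : sc 0 t = origin.
Proof. apply functional_extensionality. intro. unfold sc, origin. ring. Qed.

Lemma sc_1 t : sc 1 t = t.
Proof. apply functional_extensionality. intro. unfold sc. ring. Qed.

Lemma dist_n_sc n c u t : 0 <= c -> dist_n n (sc c u) (sc c t) = c * dist_n n u t.
Proof.
  intro Hc. unfold dist_n, sc. rewrite <- Rsum_scal. apply Rsum_ext. intros.
  rewrite <- Rmult_minus_distr_l, Rabs_mult, Rabs_pos_eq; auto.
Qed.

Lemma dist_n_nonneg n u t : 0 <= dist_n n u t.
Proof. apply Rsum_nonneg. intros. apply Rabs_pos. Qed.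

Lemma dist_n_sym n u t : dist_n n u t = dist_n n t u.
Proof. unfold dist_n. apply Rsum_ext. intros. apply Rabs_minus_sym. Qed.

Lemma dist_n_triang n u v t : dist_n n u t <= dist_n n u v + dist_n n v t.
Proof.
  unfold dist_n. rewrite <- Rsum_add. apply Rsum_le. intros.
  replace (u k - t k) with ((u k - v k) + (v k - t k)) by ring. apply Rabs_triang.
Qed.

Lemma dist_shift n i h t : (i < n)%nat -> dist_n n (shift i h t) t = Rabs h.
Proof.
  intro Hi. unfold dist_n, shift.
  rewrite (Rsum_single _ i). 
  - rewrite Nat.eqb_refl. replace (Nat.ltb i n) with true by (symmetry; apply Nat.ltb_lt; auto).
    f_equal. ring.
  - intros k Hk. apply Nat.eqb_neq in Hk. rewrite Hk. replace (t k - t k) with 0 by ring. apply Rabs_R0.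
Qed.

Lemma shift_sc i c h t : shift i (c * h) (sc c t) = sc c (shift i h t).
Proof.
  apply functional_extensionality. intro k. unfold shift, sc. destruct (Nat.eqb k i); ring.
Qed.

Lemma dist_origin_le1 n t : in_simplex n t -> dist_n n t origin <= 1.
Proof.
  intros [H1 [H2 H3]]. unfold dist_n, origin.
  erewrite Rsum_ext; [exact H2|]. intros. rewrite Rminus_0_r, Rabs_pos_eq; auto.
Qed.

Lemma dist_sc2 n a b t : dist_n n (sc a t) (sc b t) = Rabs (a - b) * dist_n n t origin.
Proof.
  unfold dist_n, sc, origin. rewrite <- Rsum_scal. apply Rsum_ext. intros.
  rewrite <- Rabs_mult. f_equal. ring.
Qed.

Lemma sc_origin c : sc c origin = origin.
Proof. apply functional_extensionality. intro. unfold sc, origin. ring. Qed.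

Lemma ratio_unit (k N : nat) : (0 < N)%nat -> (k <= N)%nat -> 0 <= INR k / INR N <= 1.
Proof.
  intros HN Hk. assert (HNp : 0 < INR N) by (apply lt_0_INR; lia). split.
  - unfold Rdiv. apply Rmult_le_pos; [apply pos_INR|left; apply Rinv_0_lt_compat; lra].
  - apply (Rmult_le_reg_r (INR N)); auto. field_simplify; [|lra]. apply le_INR; auto.
Qed.

Lemma dist_ray_step n N k t : (0 < N)%nat -> in_simplex n t ->
  dist_n n (sc (INR (S k) / INR N) t) (sc (INR k / INR N) t) <= / INR N.
Proof.
  intros HN Ht. assert (HNp : 0 < INR N) by (apply lt_0_INR; lia).
  rewrite dist_sc2, S_INR.
  replace ((INR k + 1) / INR N - INR k / INR N) with (/ INR N) by (field; lra).
  rewrite Rabs_pos_eq by (left; apply Rinv_0_lt_compat; lra).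
  pose proof (dist_origin_le1 n t Ht). pose proof (dist_n_nonneg n t origin).
  pose proof (Rinv_0_lt_compat _ HNp). nra.
Qed.

(** * Continuity and differentiability on the simplex *)

(* Neighbourhoods of t in the simplex ([Qc]) and admissible increments h of the i-th
   coordinate at t ([Qp]): the filters of continuity and of partial derivatives. *)
Definition Qc (n : nat) (t : nat -> R) (d : R) (u : nat -> R) : Prop :=
  in_simplex n u /\ dist_n n u t < d.

Definition Qp (n i : nat) (t : nat -> R) (d : R) (h : R) : Prop :=
  h <> 0 /\ Rabs h < d /\ in_simplex n (shift i h t).

Lemma Qc_mono n t : Qmono (Qc n t).
Proof. intros d d' x Hd [H1 H2]. split; auto. lra. Qed.

Lemma Qp_mono n i t : Qmono (Qp n i t).
Proof. intros d d' x Hd [H1 [H2 H3]]. split; [|split]; auto. lra. Qed.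

Lemma cont_conv {X : BanachAlgebra} n (f : (nat -> R) -> X) :
  cont_on_simplex n f <-> forall t, in_simplex n t -> conv (Qc n t) f (f t).
Proof.
  split.
  - intros H t Ht e He. destruct (H t Ht e He) as [d [Hd H']]. exists d. split; auto.
    intros x [Hx1 Hx2]. auto.
  - intros H t Ht e He. destruct (H t Ht e He) as [d [Hd H']]. exists d. split; auto.
    intros x Hx1 Hx2. apply H'. split; auto.
Qed.

Lemma partial_conv {X : BanachAlgebra} n i (f D : (nat -> R) -> X) :
  is_partial n i f D <-> forall t, in_simplex n t ->
    conv (Qp n i t) (fun h => bscal (/ h) (bsub (f (shift i h t)) (f t))) (D t).
Proof.
  split.
  - intros H t Ht e He. destruct (H t Ht e He) as [d [Hd H']]. exists d. split; auto.
    intros x [Hx1 [Hx2 Hx3]]. auto.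
  - intros H t Ht e He. destruct (H t Ht e He) as [d [Hd H']]. exists d. split; auto.
    intros x Hx1 Hx2 Hx3. apply H'. split; auto.
Qed.

Lemma Qp_to_Qc n i t : (i < n)%nat -> forall d, d > 0 -> exists d', d' > 0 /\
  forall h, Qp n i t d' h -> Qc n t d (shift i h t).
Proof.
  intros Hi d Hd. exists d. split; auto. intros h [H1 [H2 H3]]. split; auto.
  rewrite dist_shift; auto.
Qed.

Lemma cont_at_shift {X : BanachAlgebra} n i (f : (nat -> R) -> X) t :
  (i < n)%nat -> in_simplex n t -> cont_on_simplex n f ->
  conv (Qp n i t) (fun h => f (shift i h t)) (f t).
Proof.
  intros Hi Ht Hf. apply (conv_comp (Qp n i t) (Qc n t) (fun h => shift i h t) f).
  - apply Qp_to_Qc; auto.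
  - apply cont_conv; auto.
Qed.

Definition C1 {X : BanachAlgebra} n (f : (nat -> R) -> X) (D : nat -> (nat -> R) -> X) : Prop :=
  cont_on_simplex n f /\ forall i, (i < n)%nat -> is_partial n i f (D i) /\ cont_on_simplex n (D i).

(* f is C^1 with C^1 partial derivatives; [C2_iff] shows this is [C2_on_simplex]. *)
Definition C2 {X : BanachAlgebra} n (f : (nat -> R) -> X) : Prop :=
  exists D, C1 n f D /\ forall j, (j < n)%nat -> exists E, C1 n (D j) E.

Lemma C2_iff {X : BanachAlgebra} n (f : (nat -> R) -> X) : C2_on_simplex n f <-> C2 n f.
Proof.
  split.
  - intros [D1 [D2 [H1 [H2 H3]]]]. exists D1. split.
    + split; auto.
    + intros j Hj. exists (fun i => D2 i j). split.
      * apply H2; auto.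
      * intros i Hi. apply H3; auto.
  - intros [D [[H1 H2] H3]].
    assert (Hc : forall j, exists E, (j < n)%nat -> C1 n (D j) E).
    { intro j. destruct (Nat.lt_ge_cases j n) as [h|h].
      - destruct (H3 j h) as [E HE]. exists E. auto.
      - exists D. intro. lia. }
    destruct (choice _ Hc) as [E HE].
    exists D, (fun i j => E j i). split; [auto|split]; auto.
    intros i j Hi Hj. destruct (HE j Hj) as [_ HE']. apply HE'; auto.
Qed.

Lemma cont_const {X : BanachAlgebra} n (c : X) : cont_on_simplex n (fun _ => c).
Proof. apply cont_conv. intros. apply conv_const. Qed.

Lemma cont_add {X : BanachAlgebra} n (f g : (nat -> R) -> X) :
  cont_on_simplex n f -> cont_on_simplex n g -> cont_on_simplex n (fun t => badd (f t) (g t)).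
Proof.
  rewrite !cont_conv. intros Hf Hg t Ht. apply conv_add; auto. apply Qc_mono.
Qed.

Lemma cont_mul {X : BanachAlgebra} n (f g : (nat -> R) -> X) :
  cont_on_simplex n f -> cont_on_simplex n g -> cont_on_simplex n (fun t => bmul (f t) (g t)).
Proof.
  rewrite !cont_conv. intros Hf Hg t Ht. apply conv_mul; auto. apply Qc_mono.
Qed.

Lemma cont_lin {X Y : BanachAlgebra} n (L : X -> Y) (f : (nat -> R) -> X) :
  bbounded L -> cont_on_simplex n f -> cont_on_simplex n (fun t => L (f t)).
Proof.
  rewrite !cont_conv. intros HL Hf t Ht. apply conv_lin; auto.
Qed.

Lemma cont_sc {X : BanachAlgebra} n c (f : (nat -> R) -> X) :
  0 <= c <= 1 -> cont_on_simplex n f -> cont_on_simplex n (fun t => f (sc c t)).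
Proof.
  rewrite !cont_conv. intros Hc Hf t Ht.
  apply (conv_comp (Qc n t) (Qc n (sc c t)) (sc c) f).
  - intros d Hd. exists d. split; auto. intros u [Hu1 Hu2]. split.
    + apply in_simplex_sc; auto.
    + rewrite dist_n_sc by lra. pose proof (dist_n_nonneg n u t). nra.
  - apply Hf. apply in_simplex_sc; auto.
Qed.

Lemma cont_ext {X : BanachAlgebra} n (f g : (nat -> R) -> X) :
  (forall t, in_simplex n t -> f t = g t) -> cont_on_simplex n f -> cont_on_simplex n g.
Proof.
  intros He Hf t Ht e Hep. destruct (Hf t Ht e Hep) as [d [Hd H]]. exists d. split; auto.
  intros u Hu Hut. rewrite <- !He; auto.
Qed.

Lemma C1_ext {X : BanachAlgebra} n (f g : (nat -> R) -> X) D D' :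
  (forall t, in_simplex n t -> f t = g t) ->
  (forall i t, (i < n)%nat -> in_simplex n t -> D i t = D' i t) ->
  C1 n f D -> C1 n g D'.
Proof.
  intros He HD [Hc HP]. split.
  - eapply cont_ext; eauto.
  - intros i Hi. destruct (HP i Hi) as [Hp Hc']. split.
    + intros t Ht e Hep. destruct (Hp t Ht e Hep) as [d [Hd H]]. exists d. split; auto.
      intros h Hh Hhd Hs. rewrite <- !He, <- HD; auto.
    + eapply cont_ext; [|exact Hc']. intros. apply HD; auto.
Qed.

Lemma C1_const {X : BanachAlgebra} n (c : X) : C1 n (fun _ => c) (fun _ _ => bzero).
Proof.
  split; [apply cont_const|]. intros i Hi. split; [|apply cont_const].
  apply partial_conv. intros t Ht.
  eapply conv_ext; [apply Qp_mono| |apply (conv_const _ bzero)].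
  exists 1. split; [lra|]. intros. rewrite bsub_self, bscal_0_r. reflexivity.
Qed.

Lemma C1_add {X : BanachAlgebra} n (f g : (nat -> R) -> X) D E :
  C1 n f D -> C1 n g E -> C1 n (fun t => badd (f t) (g t)) (fun i t => badd (D i t) (E i t)).
Proof.
  intros [Hf HD] [Hg HE]. split; [apply cont_add; auto|]. intros i Hi.
  destruct (HD i Hi) as [HD1 HD2]. destruct (HE i Hi) as [HE1 HE2].
  split; [|apply cont_add; auto].
  apply partial_conv. rewrite partial_conv in HD1, HE1. intros t Ht.
  eapply conv_ext; [apply Qp_mono| |apply conv_add; [apply Qp_mono|apply HD1; auto|apply HE1; auto]].
  exists 1. split; [lra|]. intros h _. rewrite bsub_add_add, bscal_distr_r. reflexivity.
Qed.

Lemma C1_lin {X Y : BanachAlgebra} n (L : X -> Y) (f : (nat -> R) -> X) D :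
  bbounded L -> C1 n f D -> C1 n (fun t => L (f t)) (fun i t => L (D i t)).
Proof.
  intros HL [Hf HD]. split; [apply cont_lin; auto|]. intros i Hi.
  destruct (HD i Hi) as [HD1 HD2]. split; [|apply cont_lin; auto].
  apply partial_conv. rewrite partial_conv in HD1. intros t Ht.
  eapply conv_ext; [apply Qp_mono| |apply conv_lin; [exact HL|apply HD1; auto]].
  exists 1. split; [lra|]. intros h _. destruct HL as [Hl _].
  rewrite (proj2 Hl), (blinear_sub L Hl). reflexivity.
Qed.

Lemma quot_mul {X : BanachAlgebra} (h : R) (a b c d : X) :
  bscal (/ h) (bsub (bmul a b) (bmul c d)) =
  badd (bmul (bscal (/ h) (bsub a c)) b) (bmul c (bscal (/ h) (bsub b d))).
Proof. rewrite bmul_diff, bscal_distr_r, bmul_scal_l, bmul_scal_r. reflexivity. Qed.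

Lemma C1_mul {X : BanachAlgebra} n (f g : (nat -> R) -> X) D E :
  C1 n f D -> C1 n g E ->
  C1 n (fun t => bmul (f t) (g t)) (fun i t => badd (bmul (D i t) (g t)) (bmul (f t) (E i t))).
Proof.
  intros [Hf HD] [Hg HE]. split; [apply cont_mul; auto|]. intros i Hi.
  destruct (HD i Hi) as [HD1 HD2]. destruct (HE i Hi) as [HE1 HE2].
  split.
  - apply partial_conv. rewrite partial_conv in HD1, HE1. intros t Ht.
    eapply conv_ext; [apply Qp_mono| |].
    2:{ apply conv_add; [apply Qp_mono| |].
        - apply conv_mul; [apply Qp_mono|apply HD1; auto|]. apply cont_at_shift; auto.
        - apply conv_mul; [apply Qp_mono|apply conv_const|apply HE1; auto]. }
    exists 1. split; [lra|]. intros h _. rewrite quot_mul. reflexivity.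
  - apply cont_add; apply cont_mul; auto.
Qed.

Lemma C1_sc {X : BanachAlgebra} n c (f : (nat -> R) -> X) D :
  0 <= c <= 1 -> C1 n f D -> C1 n (fun t => f (sc c t)) (fun i t => bscal c (D i (sc c t))).
Proof.
  intros Hc [Hf HD]. split; [apply cont_sc; auto|]. intros i Hi.
  destruct (HD i Hi) as [HD1 HD2].
  split; [|apply cont_lin; [apply bbounded_scal|apply cont_sc; auto]].
  apply partial_conv. intros t Ht.
  destruct (Rle_lt_or_eq_dec _ _ (proj1 Hc)) as [Hcp|Hc0].
  - rewrite partial_conv in HD1.
    eapply conv_ext; [apply Qp_mono| |].
    2:{ apply (conv_lin _ (fun x => bscal c x)); [apply bbounded_scal|].
        apply (conv_comp (Qp n i t) (Qp n i (sc c t)) (fun h => c * h)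
                 (fun h => bscal (/ h) (bsub (f (shift i h (sc c t))) (f (sc c t))))).
        - intros d Hd. exists d. split; auto. intros h [H1 [H2 H3]]. split; [|split].
          + intro Hz. apply Rmult_integral in Hz. destruct Hz; lra.
          + rewrite Rabs_mult, Rabs_pos_eq by lra. pose proof (Rabs_pos h). nra.
          + rewrite shift_sc. apply in_simplex_sc; auto.
        - apply HD1. apply in_simplex_sc; auto. }
    exists 1. split; [lra|]. intros h [Hh _]. simpl.
    rewrite shift_sc, bscal_assoc. f_equal. field; lra.
  - subst c. rewrite bscal_0. eapply conv_ext; [apply Qp_mono| |apply (conv_const _ bzero)].
    exists 1. split; [lra|]. intros. rewrite !sc_0, bsub_self, !bscal_0_r. reflexivity.
Qed.

Lemma inv_diff {X : BanachAlgebra} (a b wa wb : X) :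
  bmul wa a = bone -> bmul b wb = bone ->
  bsub wa wb = bmul wa (bmul (bsub b a) wb).
Proof.
  intros H1 H2. rewrite bmul_sub_l, bmul_sub_r, H2, bmul_1_r, bmul_assoc, H1, bmul_1_l. reflexivity.
Qed.

Lemma bnorm_mul3 {X : BanachAlgebra} (a b c : X) M :
  bnorm a <= M -> bnorm c <= M -> bnorm (bmul a (bmul b c)) <= M * M * bnorm b.
Proof.
  intros Ha Hc. eapply Rle_trans; [apply bnorm_mul|].
  pose proof (bnorm_mul b c). pose proof (bnorm_pos a). pose proof (bnorm_pos b). pose proof (bnorm_pos c).
  apply Rle_trans with (M * (bnorm b * bnorm c)).
  - pose proof (bnorm_pos (bmul b c)). apply Rmult_le_compat; lra.
  - assert (bnorm b * bnorm c <= bnorm b * M) by (apply Rmult_le_compat_l; lra).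
    assert (0 <= M) by lra.
    apply Rle_trans with (M * (bnorm b * M)); [apply Rmult_le_compat_l; lra|]. lra.
Qed.

Lemma C1_inv {X : BanachAlgebra} n (f w : (nat -> R) -> X) D M :
  (forall t, in_simplex n t -> bmul (f t) (w t) = bone /\ bmul (w t) (f t) = bone) ->
  (forall t, in_simplex n t -> bnorm (w t) <= M) ->
  C1 n f D -> C1 n w (fun i t => bopp (bmul (w t) (bmul (D i t) (w t)))).
Proof.
  intros Hinv HM [Hf HD].
  assert (HM0 : forall t, in_simplex n t -> 0 <= M).
  { intros t Ht. pose proof (bnorm_pos (w t)). pose proof (HM t Ht). lra. }
  assert (Hw : cont_on_simplex n w).
  { apply cont_conv. intros t Ht. rewrite cont_conv in Hf.
    apply (conv_ext (Qc n t) (fun u => if excluded_middle_informative (in_simplex n u) then w u else w t)).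
    { apply Qc_mono. }
    { exists 1. split; [lra|]. intros u [Hu _]. destruct (excluded_middle_informative _); tauto. }
    apply (conv_dom _ f _ (f t) _ (M * M + 1)); [pose proof (HM0 t Ht); nra| |apply Hf; auto].
    intro u. destruct (excluded_middle_informative (in_simplex n u)) as [Hu|Hu].
    - rewrite (inv_diff (f u) (f t)) by (apply Hinv; auto).
      eapply Rle_trans; [apply bnorm_mul3; apply HM; auto|].
      rewrite bnorm_sub_sym. pose proof (bnorm_pos (bsub (f u) (f t))). nra.
    - rewrite bsub_self, bnorm_0. pose proof (bnorm_pos (bsub (f u) (f t))). pose proof (HM0 t Ht). nra. }
  split; auto. intros i Hi. destruct (HD i Hi) as [HD1 HD2]. split.
  - apply partial_conv. rewrite partial_conv in HD1. intros t Ht.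
    eapply conv_ext; [apply Qp_mono| |].
    2:{ apply (conv_lin _ (fun x => bopp x)); [apply bbounded_opp|].
        apply conv_mul; [apply Qp_mono|apply cont_at_shift; auto|].
        apply conv_mul; [apply Qp_mono|apply HD1; auto|apply conv_const]. }
    exists 1. split; [lra|]. intros h [Hh [_ Hs]]. simpl.
    rewrite (inv_diff (f (shift i h t)) (f t) (w (shift i h t)) (w t)) by (apply Hinv; auto).
    rewrite <- (bsub_opp (f (shift i h t)) (f t)), bmul_opp_l, bmul_opp_r, bscal_opp, bmul_scal_l, bmul_scal_r.
    reflexivity.
  - apply cont_lin; [apply bbounded_opp|]. apply cont_mul; auto. apply cont_mul; auto.
Qed.

Lemma C2_ext {X : BanachAlgebra} n (f g : (nat -> R) -> X) :
  (forall t, in_simplex n t -> f t = g t) -> C2 n f -> C2 n g.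
Proof.
  intros He [D [HD HE]]. exists D. split; auto. eapply C1_ext; [exact He| |exact HD]. auto.
Qed.

Lemma C2_const {X : BanachAlgebra} n (c : X) : C2 n (fun _ => c).
Proof.
  exists (fun _ _ => bzero). split; [apply C1_const|]. intros. eexists. apply C1_const.
Qed.

Lemma C2_add {X : BanachAlgebra} n (f g : (nat -> R) -> X) :
  C2 n f -> C2 n g -> C2 n (fun t => badd (f t) (g t)).
Proof.
  intros [D [HD HDE]] [D' [HD' HDE']]. eexists. split; [apply C1_add; eauto|].
  intros j Hj. destruct (HDE j Hj) as [E HE]. destruct (HDE' j Hj) as [E' HE'].
  eexists. simpl. apply C1_add; eauto.
Qed.

Lemma C2_mul {X : BanachAlgebra} n (f g : (nat -> R) -> X) :
  C2 n f -> C2 n g -> C2 n (fun t => bmul (f t) (g t)).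
Proof.
  intros [D [HD HDE]] [D' [HD' HDE']]. eexists. split; [apply C1_mul; eauto|].
  intros j Hj. destruct (HDE j Hj) as [E HE]. destruct (HDE' j Hj) as [E' HE'].
  eexists. simpl. apply C1_add; apply C1_mul; eauto.
Qed.

Lemma C2_lin {X Y : BanachAlgebra} n (L : X -> Y) (f : (nat -> R) -> X) :
  bbounded L -> C2 n f -> C2 n (fun t => L (f t)).
Proof.
  intros HL [D [HD HDE]]. eexists. split; [apply C1_lin; eauto|].
  intros j Hj. destruct (HDE j Hj) as [E HE]. eexists. simpl. apply C1_lin; eauto.
Qed.

Lemma C2_sc {X : BanachAlgebra} n c (f : (nat -> R) -> X) :
  0 <= c <= 1 -> C2 n f -> C2 n (fun t => f (sc c t)).
Proof.
  intros Hc [D [HD HDE]]. eexists. split; [apply C1_sc; eauto|].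
  intros j Hj. destruct (HDE j Hj) as [E HE]. eexists. simpl.
  apply (C1_lin n (fun x => bscal c x)); [apply bbounded_scal|]. apply C1_sc; eauto.
Qed.

Lemma C2_inv {X : BanachAlgebra} n (f w : (nat -> R) -> X) M :
  (forall t, in_simplex n t -> bmul (f t) (w t) = bone /\ bmul (w t) (f t) = bone) ->
  (forall t, in_simplex n t -> bnorm (w t) <= M) ->
  C2 n f -> C2 n w.
Proof.
  intros Hinv HM [D [HD HDE]].
  pose proof (C1_inv n f w D M Hinv HM HD) as Hw.
  eexists. split; [exact Hw|].
  intros j Hj. destruct (HDE j Hj) as [E HE]. eexists. simpl.
  apply (C1_lin n (fun x => bopp x)); [apply bbounded_opp|].
  apply C1_mul; [exact Hw|]. apply C1_mul; eauto.
Qed.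

Lemma C2_asum {X : BanachAlgebra} n (F : nat -> (nat -> R) -> X) K :
  (forall k, (k < K)%nat -> C2 n (F k)) -> C2 n (fun t => asum (fun k => F k t) K).
Proof.
  induction K; intro H; simpl.
  - apply C2_const.
  - apply C2_add; auto.
Qed.

Lemma C2_cont {X : BanachAlgebra} n (f : (nat -> R) -> X) : C2 n f -> cont_on_simplex n f.
Proof. intros [D [[H _] _]]. exact H. Qed.

(** * Compactness of the simplex

    Sequential compactness via Bolzano-Weierstrass in each coordinate, hence uniform
    continuity and boundedness of continuous functions on the simplex. *)

Definition cvs (u : nat -> R) (l : R) : Prop :=
  forall e, e > 0 -> exists N, forall k, (N <= k)%nat -> Rabs (u k - l) < e.

Definition sincr (phi : nat -> nat) : Prop := forall k, (phi k < phi (S k))%nat.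

Lemma sincr_ge phi : sincr phi -> forall k, (k <= phi k)%nat.
Proof. intros H k. induction k; [lia|]. pose proof (H k). lia. Qed.

Lemma sincr_mono phi : sincr phi -> forall a b, (a <= b)%nat -> (phi a <= phi b)%nat.
Proof.
  intros H a b Hab. induction Hab; [lia|]. pose proof (H m). lia.
Qed.

Lemma sincr_comp phi psi : sincr phi -> sincr psi -> sincr (fun k => phi (psi k)).
Proof.
  intros H1 H2 k. pose proof (H2 k). pose proof (sincr_mono phi H1 (S (psi k)) (psi (S k)) H).
  pose proof (H1 (psi k)). lia.
Qed.

Lemma cvs_sub u l psi : sincr psi -> cvs u l -> cvs (fun k => u (psi k)) l.
Proof.
  intros Hp Hc e He. destruct (Hc e He) as [N HN]. exists N. intros k Hk. apply HN.
  pose proof (sincr_ge psi Hp k). lia.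
Qed.

Lemma bw1 (y : nat -> R) : (forall k, 0 <= y k <= 1) -> exists psi l, sincr psi /\ cvs (fun k => y (psi k)) l.
Proof.
  intro Hy. destruct (Bolzano_Weierstrass y (fun c => 0 <= c <= 1) (compact_P3 0 1) Hy) as [l Hl].
  assert (Hg : forall N k, exists p, (N <= p)%nat /\ Rabs (y p - l) < / INR (S k)).
  { intros N k. assert (Hpos : 0 < / INR (S k)) by (apply Rinv_0_lt_compat; apply lt_0_INR; lia).
    destruct (Hl (disc l (mkposreal _ Hpos)) N) as [p [Hp1 Hp2]].
    - exists (mkposreal _ Hpos). intros z Hz. exact Hz.
    - exists p. split; auto. }
  assert (Hg' : forall Nk : nat * nat, exists p, (fst Nk <= p)%nat /\ Rabs (y p - l) < / INR (S (snd Nk))).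
  { intros [N k]. apply Hg. }
  destruct (choice _ Hg') as [g Hgs].
  set (psi := fix psi k := match k with O => g (O, O) | S k' => g (S (psi k'), S k') end).
  exists psi, l. split.
  - intro k. simpl. destruct (Hgs (S (psi k), S k)) as [H _]. simpl in H. lia.
  - intros e He. destruct (archimed_cor1 e He) as [N [HN1 HN2]]. exists N. intros k Hk.
    assert (Hb : Rabs (y (psi k) - l) < / INR (S k)).
    { destruct k; simpl; [apply (Hgs (O, O))|apply (Hgs (S (psi k), S k))]. }
    eapply Rlt_trans; [exact Hb|]. eapply Rle_lt_trans; [|exact HN1].
    apply Rinv_le_contravar; [apply lt_0_INR; lia|]. apply le_INR. lia.
Qed.

Lemma coords_conv (n : nat) (x : nat -> nat -> R) :
  (forall k i, 0 <= x k i <= 1) ->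
  forall d, exists phi l, sincr phi /\ forall i, (i < d)%nat -> cvs (fun k => x (phi k) i) (l i).
Proof.
  intros Hx d. induction d.
  - exists (fun k => k), (fun _ => 0). split; [intro; lia|]. intros; lia.
  - destruct IHd as [phi [l [Hp Hl]]].
    destruct (bw1 (fun k => x (phi k) d)) as [psi [ld [Hps Hld]]]; [intro; apply Hx|].
    exists (fun k => phi (psi k)), (fun i => if Nat.eqb i d then ld else l i). split.
    + apply sincr_comp; auto.
    + intros i Hi. destruct (Nat.eqb i d) eqn:E.
      * apply Nat.eqb_eq in E. subst. exact Hld.
      * apply Nat.eqb_neq in E. apply (cvs_sub (fun k => x (phi k) i)); auto. apply Hl. lia.
Qed.

Lemma simplex_coord_bound n t i : in_simplex n t -> 0 <= t i <= 1.
Proof.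
  intros [H1 [H2 H3]]. destruct (Nat.lt_ge_cases i n) as [h|h].
  - split; auto. eapply Rle_trans; [|exact H2]. apply (Rsum_term_le t i n); auto.
  - rewrite H3 by auto. lra.
Qed.

Lemma seq_compact n (x : nat -> nat -> R) : (forall k, in_simplex n (x k)) ->
  exists phi p, sincr phi /\ in_simplex n p /\
    forall e, e > 0 -> exists N, forall k, (N <= k)%nat -> dist_n n (x (phi k)) p < e.
Proof.
  intro Hx. destruct (coords_conv n x (fun k i => simplex_coord_bound n _ i (Hx k)) n) as [phi [l [Hp Hl]]].
  set (p := fun i => if Nat.ltb i n then l i else 0).
  assert (Hd : forall e, e > 0 -> exists N, forall k, (N <= k)%nat -> dist_n n (x (phi k)) p < e).
  { intros e He. set (e' := e / (INR n + 1)).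
    assert (He' : e' > 0) by (unfold e'; apply Rdiv_lt_0_compat; [lra|pose proof (pos_INR n); lra]).
    destruct (finite_N1 (fun i N => forall k, (N <= k)%nat -> Rabs (x (phi k) i - l i) < e') n) as [N HN].
    - intros i N N' HNN H k Hk. apply H. lia.
    - intros i Hi. apply (Hl i Hi e' He').
    - exists N. intros k Hk. unfold dist_n.
      apply Rle_lt_trans with (Rsum (fun _ => e') n).
      + apply Rsum_le. intros i Hi. unfold p. replace (Nat.ltb i n) with true by (symmetry; apply Nat.ltb_lt; auto).
        left. apply HN; auto.
      + rewrite Rsum_const. unfold e'. pose proof (pos_INR n).
        apply (Rmult_lt_reg_r (INR n + 1)); [lra|]. field_simplify; lra. }
  exists phi, p. split; auto. split; auto.
  split; [|split].
  - intros i Hi. apply Rnot_lt_le. intro Hneg.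
    destruct (Hd (- p i) ltac:(lra)) as [N HN]. specialize (HN N (le_n N)).
    pose proof (Rsum_term_le (fun i => Rabs (x (phi N) i - p i)) i n ltac:(intros; apply Rabs_pos) Hi).
    simpl in H. unfold dist_n in HN. destruct (Hx (phi N)) as [Hx1 _]. pose proof (Hx1 i Hi).
    pose proof (Rle_abs (x (phi N) i - p i)). lra.
  - apply Rnot_lt_le. intro Hgt.
    destruct (Hd (Rsum p n - 1) ltac:(lra)) as [N HN]. specialize (HN N (le_n N)).
    pose proof (Rsum_abs_diff p (x (phi N)) n). destruct (Hx (phi N)) as [_ [Hs _]].
    unfold dist_n in HN. rewrite (Rsum_ext (fun i => Rabs (p i - x (phi N) i)) (fun i => Rabs (x (phi N) i - p i))) in H
      by (intros; apply Rabs_minus_sym). lra.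
  - intros i Hi. unfold p. replace (Nat.ltb i n) with false by (symmetry; apply Nat.ltb_ge; auto). reflexivity.
Qed.

Lemma unif_cont {X : BanachAlgebra} n (f : (nat -> R) -> X) : cont_on_simplex n f ->
  forall e, e > 0 -> exists d, d > 0 /\ forall u t, in_simplex n u -> in_simplex n t ->
    dist_n n u t < d -> bnorm (bsub (f u) (f t)) < e.
Proof.
  intros Hf e He. apply NNPP. intro Hno.
  assert (Hk : forall k : nat, exists ut : (nat -> R) * (nat -> R), in_simplex n (fst ut) /\ in_simplex n (snd ut) /\
     dist_n n (fst ut) (snd ut) < / INR (S k) /\ e <= bnorm (bsub (f (fst ut)) (f (snd ut)))).
  { intro k. apply NNPP. intro Hk. apply Hno. exists (/ INR (S k)). split.
    - apply Rinv_0_lt_compat, lt_0_INR. lia.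
    - intros u t Hu Ht Hut. apply Rnot_le_lt. intro Hle. apply Hk. exists (u, t). simpl. auto. }
  destruct (choice _ Hk) as [g Hg].
  destruct (seq_compact n (fun k => fst (g k)) (fun k => proj1 (Hg k))) as [phi [p [Hphi [Hp Hconv]]]].
  destruct (Hf p Hp (e/2) ltac:(lra)) as [d [Hd Hcont]].
  destruct (Hconv (d/2) ltac:(lra)) as [N1 HN1].
  destruct (archimed_cor1 (d/2) ltac:(lra)) as [N2 [HN2a HN2b]].
  set (k := Nat.max N1 N2).
  destruct (Hg (phi k)) as [Hu [Ht [Hut Hfe]]].
  specialize (HN1 k ltac:(unfold k; lia)).
  assert (Hsmall : / INR (S (phi k)) < d/2).
  { eapply Rle_lt_trans; [|exact HN2a]. apply Rinv_le_contravar; [apply lt_0_INR; lia|].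
    apply le_INR. pose proof (sincr_ge phi Hphi k). unfold k in *. lia. }
  assert (H1 : bnorm (bsub (f (fst (g (phi k)))) (f p)) < e/2) by (apply Hcont; auto; lra).
  assert (H2 : bnorm (bsub (f (snd (g (phi k)))) (f p)) < e/2).
  { apply Hcont; auto. pose proof (dist_n_triang n (snd (g (phi k))) (fst (g (phi k))) p).
    rewrite dist_n_sym in Hut. simpl in HN1. lra. }
  pose proof (bnorm_sub_triang (f (fst (g (phi k)))) (f p) (f (snd (g (phi k))))).
  rewrite (bnorm_sub_sym (f p)) in H. lra.
Qed.

Lemma ray_steps {X : BanachAlgebra} n (f : (nat -> R) -> X) : cont_on_simplex n f ->
  forall eps, eps > 0 -> exists N, (0 < N)%nat /\ forall k t, (k < N)%nat -> in_simplex n t ->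
    bnorm (bsub (f (sc (INR (S k) / INR N) t)) (f (sc (INR k / INR N) t))) < eps.
Proof.
  intros Hf eps Heps. destruct (unif_cont n f Hf eps Heps) as [d [Hd Hunif]].
  destruct (archimed_cor1 d Hd) as [N [HNd HN]]. exists N. split; auto.
  intros k t Hk Ht. apply Hunif.
  - apply in_simplex_sc; [apply ratio_unit|]; auto.
  - apply in_simplex_sc; [apply ratio_unit; lia|auto].
  - eapply Rle_lt_trans; [apply dist_ray_step|]; auto.
Qed.

(* A continuous function on the (compact) simplex is bounded: walk from the origin to t in
   N steps, each changing the value by less than 1. *)
Lemma cont_bounded {X : BanachAlgebra} n (f : (nat -> R) -> X) : cont_on_simplex n f ->
  exists M, M > 0 /\ forall t, in_simplex n t -> bnorm (f t) <= M.
Proof.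
  intro Hf. destruct (ray_steps n f Hf 1 Rlt_0_1) as [N [HN Hstep]].
  exists (bnorm (f origin) + INR N + 1).
  split; [pose proof (bnorm_pos (f origin)); pose proof (pos_INR N); lra|].
  intros t Ht.
  assert (Hk : forall k, (k <= N)%nat -> bnorm (f (sc (INR k / INR N) t)) <= bnorm (f origin) + INR k).
  { induction k as [|k IHk]; intro Hk.
    - simpl. rewrite Rdiv_0_l, sc_0. lra.
    - pose proof (IHk ltac:(lia)). pose proof (Hstep k t ltac:(lia) Ht).
      pose proof (bnorm_add_le (f (sc (INR (S k) / INR N) t)) (f (sc (INR k / INR N) t))).
      pose proof (S_INR k). lra. }
  specialize (Hk N (le_n N)).
  rewrite Rdiv_diag, sc_1 in Hk by (apply not_0_INR; lia). lra.
Qed.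

(** * The Neumann series *)

(* qpow x k = x^(k+1) and the partial sums nsum x K = 1 + x + ... + x^K of the
   Neumann series of (1 - x)^-1. *)
Fixpoint qpow {X : BanachAlgebra} (x : X) (k : nat) : X :=
  match k with O => x | S k' => bmul x (qpow x k') end.

Lemma qpow_comm {X : BanachAlgebra} (x : X) k : bmul x (qpow x k) = bmul (qpow x k) x.
Proof.
  induction k; simpl; auto. rewrite IHk at 1. apply bmul_assoc.
Qed.

Lemma qpow_norm {X : BanachAlgebra} (x : X) k : bnorm x <= 1/2 -> bnorm (qpow x k) <= (1/2) ^ (S k).
Proof.
  intro H. induction k; simpl.
  - lra.
  - eapply Rle_trans; [apply bnorm_mul|]. apply Rmult_le_compat; auto; try apply bnorm_pos; simpl in IHk; exact IHk.
Qed.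

Definition nsum {X : BanachAlgebra} (x : X) (K : nat) : X := badd bone (asum (qpow x) K).

Lemma nsum_step {X : BanachAlgebra} (x : X) K : nsum x (S K) = badd (nsum x K) (qpow x K).
Proof. unfold nsum. simpl. apply badd_assoc. Qed.

Lemma nsum_left {X : BanachAlgebra} (x : X) K : bsub (nsum x K) (bmul x (nsum x K)) = bsub bone (qpow x K).
Proof.
  induction K.
  - unfold nsum. simpl. rewrite badd_0, bmul_1_r. reflexivity.
  - rewrite nsum_step, bmul_distr_l, bsub_add_add, IHK. simpl.
    symmetry. apply bsub_chain.
Qed.

Lemma nsum_right {X : BanachAlgebra} (x : X) K : bsub (nsum x K) (bmul (nsum x K) x) = bsub bone (qpow x K).
Proof.
  induction K.
  - unfold nsum. simpl. rewrite badd_0, bmul_1_l. reflexivity.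
  - rewrite nsum_step, bmul_distr_r, bsub_add_add, IHK. simpl. rewrite <- qpow_comm.
    symmetry. apply bsub_chain.
Qed.

Lemma nsum_norm {X : BanachAlgebra} (x : X) K : bnorm x <= 1/2 -> bnorm (nsum x K) <= bnorm (@bone X) + 1 - (1/2)^K.
Proof.
  intro H. induction K.
  - unfold nsum. simpl. rewrite badd_0. lra.
  - rewrite nsum_step. eapply Rle_trans; [apply bnorm_triang|].
    pose proof (qpow_norm x K H). simpl in *. lra.
Qed.

Lemma geom_tail {X : BanachAlgebra} (u : nat -> X) :
  (forall k, bnorm (bsub (u (S k)) (u k)) <= (1/2) ^ (S k)) ->
  forall q p, bnorm (bsub (u (q + p)%nat) (u q)) <= (1/2) ^ q - (1/2) ^ (q + p).
Proof.
  intros H q p. induction p.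
  - rewrite Nat.add_0_r, bsub_self, bnorm_0. lra.
  - replace (q + S p)%nat with (S (q + p)) by lia.
    eapply Rle_trans; [apply (bnorm_sub_triang _ (u (q + p)%nat))|].
    pose proof (H (q + p)%nat). simpl in *. lra.
Qed.

Lemma pow_half_small (e : R) : e > 0 -> exists N, (1/2) ^ N < e.
Proof.
  intro He. destruct (pow_lt_1_zero (1/2) ltac:(rewrite Rabs_pos_eq; lra) e He) as [N HN].
  exists N. specialize (HN N (le_n N)). rewrite Rabs_pos_eq in HN; auto. apply pow_le. lra.
Qed.

Lemma pow_half_mono N p : (N <= p)%nat -> (1/2) ^ p <= (1/2) ^ N.
Proof.
  intro H. replace p with (N + (p - N))%nat by lia. rewrite pow_add.
  pose proof (pow_le (1/2) N ltac:(lra)). pose proof (pow_incr (1/2) 1 (p-N) ltac:(lra)) as Hpi. rewrite pow1 in Hpi. rewrite <- (Rmult_1_r ((1/2)^N)) at 2. apply Rmult_le_compat_l; lra.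
Qed.

Definition seq_lim {X : BanachAlgebra} (u : nat -> X) (l : X) : Prop :=
  forall eps, eps > 0 -> exists N, forall p, (N <= p)%nat -> bnorm (bsub (u p) l) < eps.

(* If a bounded linear L sends u_p to 1 - q_p, with u_p -> w and q_p -> 0, then L w = 1.
   Used with L = left and right multiplication to identify the sum of the Neumann series. *)
Lemma inverse_of_limit {X Y : BanachAlgebra} (L : X -> Y) (u : nat -> X) (q : nat -> Y) w :
  bbounded L -> seq_lim u w -> seq_lim q bzero ->
  (forall p, L (u p) = bsub bone (q p)) -> L w = bone.
Proof.
  intros [HL [C [HC HCb]]] Hu Hq Hid. apply bnorm_small_eq. intros eps Heps.
  destruct (Hu (eps / (2 * C))) as [N1 HN1]; [apply Rdiv_lt_0_compat; lra|].
  destruct (Hq (eps / 2)) as [N2 HN2]; [lra|].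
  specialize (HN1 (Nat.max N1 N2) ltac:(lia)). specialize (HN2 (Nat.max N1 N2) ltac:(lia)).
  set (p := Nat.max N1 N2) in *. rewrite bsub_0_r in HN2.
  eapply Rle_lt_trans; [apply (bnorm_sub_triang _ (L (u p)))|].
  assert (Hfar : bnorm (bsub (L w) (L (u p))) <= eps / 2).
  { rewrite <- (blinear_sub L HL). eapply Rle_trans; [apply HCb|].
    rewrite bnorm_sub_sym. apply Rlt_le in HN1.
    apply (Rmult_le_compat_l C) in HN1; [|lra].
    replace (C * (eps / (2 * C))) with (eps / 2) in HN1 by (field; lra). exact HN1. }
  assert (Hnear : bnorm (bsub (L (u p)) bone) = bnorm (q p)).
  { rewrite Hid, bnorm_sub_sym, bsub_sub_cancel. reflexivity. }
  lra.
Qed.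

(* Neumann series: an element at distance <= 1/2 from the unit is invertible, with an
   inverse bounded independently of the element (this uniform bound is what makes the inverse
   of a C^2 function again C^2 in [C2_unit_near_one]). *)
Lemma neumann_inverse {X : BanachAlgebra} (a : X) : bnorm (bsub bone a) <= 1/2 ->
  exists w, bmul a w = bone /\ bmul w a = bone /\ bnorm w <= bnorm (@bone X) + 1.
Proof.
  intro Hx. set (x := bsub bone a). set (u := nsum x).
  assert (Ha : a = bsub bone x) by (unfold x; symmetry; apply bsub_sub_cancel).
  assert (Hstep : forall k, bnorm (bsub (u (S k)) (u k)) <= (1/2) ^ (S k)).
  { intro k. unfold u. rewrite nsum_step. unfold bsub.
    rewrite badd_comm, badd_assoc, badd_opp_l, badd_0_l. apply qpow_norm; auto. }
  assert (Hcauchy : forall p q, (q <= p)%nat -> bnorm (bsub (u p) (u q)) <= (1/2) ^ q).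
  { intros p q Hpq. replace p with (q + (p - q))%nat by lia.
    pose proof (geom_tail u Hstep q (p - q)%nat).
    pose proof (pow_le (1/2) (q + (p - q)) ltac:(lra)). lra. }
  destruct (bcomplete X u) as [w Hw].
  { intros eps Heps. destruct (pow_half_small (eps/2) ltac:(lra)) as [N HN]. exists N.
    intros p q Hp Hq. eapply Rle_lt_trans; [apply (bnorm_sub_triang _ (u N))|].
    rewrite (bnorm_sub_sym (u N)). pose proof (Hcauchy p N Hp). pose proof (Hcauchy q N Hq). lra. }
  assert (Hpow : seq_lim (qpow x) bzero).
  { intros eps Heps. destruct (pow_half_small eps Heps) as [N HN]. exists N. intros p Hp.
    rewrite bsub_0_r. eapply Rle_lt_trans; [apply qpow_norm; auto|].
    pose proof (pow_half_mono N (S p) ltac:(lia)). lra. }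
  exists w. split; [|split].
  - apply (inverse_of_limit (fun y => bmul a y) u (qpow x)); auto; [apply bbounded_mul_l|].
    intro p. rewrite Ha at 1. rewrite bmul_sub_l, bmul_1_l. apply nsum_left.
  - apply (inverse_of_limit (fun y => bmul y a) u (qpow x)); auto; [apply bbounded_mul_r|].
    intro p. rewrite Ha at 1. rewrite bmul_sub_r, bmul_1_r. apply nsum_right.
  - destruct (Rle_or_lt (bnorm w) (bnorm (@bone X) + 1)) as [h|h]; auto. exfalso.
    destruct (Hw (bnorm w - (bnorm (@bone X) + 1)) ltac:(lra)) as [N HN].
    specialize (HN N (le_n N)). pose proof (bnorm_add_le w (u N)).
    change (bnorm (bsub (u N) w) < bnorm w - (bnorm (@bone X) + 1)) in HN.
    rewrite bnorm_sub_sym in HN.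
    pose proof (nsum_norm x N Hx). pose proof (pow_le (1/2) N ltac:(lra)). unfold u in *. lra.
Qed.

(** * The Banach algebra of m x m matrices

    A matrix is a function nat -> nat -> A vanishing outside [0,m) x [0,m); with the
    l^1-norm of its entries, M_m(A) is again a unital Banach algebra. *)

Definition trunc {A : BanachAlgebra} (m : nat) (X : nat -> nat -> A) : nat -> nat -> A :=
  fun i j => if andb (Nat.ltb i m) (Nat.ltb j m) then X i j else bzero.

Lemma trunc_idem {A : BanachAlgebra} m (X : nat -> nat -> A) : trunc m (trunc m X) = trunc m X.
Proof.
  apply functional_extensionality; intro i; apply functional_extensionality; intro j.
  unfold trunc. destruct (andb _ _); auto.
Qed.

Definition mcar (A : BanachAlgebra) (m : nat) := {X : nat -> nat -> A | trunc m X = X}.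

Definition mk {A : BanachAlgebra} (m : nat) (X : nat -> nat -> A) : mcar A m :=
  exist _ (trunc m X) (trunc_idem m X).

Definition mv {A : BanachAlgebra} {m : nat} (X : mcar A m) : nat -> nat -> A := proj1_sig X.

Lemma mv_mk {A : BanachAlgebra} m (X : nat -> nat -> A) i j :
  (i < m)%nat -> (j < m)%nat -> mv (mk m X) i j = X i j.
Proof.
  intros Hi Hj. unfold mv, mk, trunc; simpl.
  replace (Nat.ltb i m) with true by (symmetry; apply Nat.ltb_lt; auto).
  replace (Nat.ltb j m) with true by (symmetry; apply Nat.ltb_lt; auto). reflexivity.
Qed.

Lemma mv_out {A : BanachAlgebra} m (X : mcar A m) i j :
  ~ ((i < m)%nat /\ (j < m)%nat) -> mv X i j = bzero.
Proof.
  intro H. destruct X as [x Hx]. unfold mv; simpl. rewrite <- Hx. unfold trunc.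
  destruct (Nat.ltb i m) eqn:E1; destruct (Nat.ltb j m) eqn:E2; simpl; auto.
  apply Nat.ltb_lt in E1. apply Nat.ltb_lt in E2. tauto.
Qed.

Lemma meq {A : BanachAlgebra} m (X Y : mcar A m) :
  (forall i j, (i < m)%nat -> (j < m)%nat -> mv X i j = mv Y i j) -> X = Y.
Proof.
  intro H. destruct X as [x Hx], Y as [y Hy]. apply subset_eq_compat. simpl in H.
  rewrite <- Hx, <- Hy.
  apply functional_extensionality; intro i; apply functional_extensionality; intro j.
  unfold trunc. destruct (Nat.ltb i m) eqn:E1; destruct (Nat.ltb j m) eqn:E2; simpl; auto.
  apply Nat.ltb_lt in E1. apply Nat.ltb_lt in E2. apply H; auto.
Qed.

Definition madd {A : BanachAlgebra} {m} (X Y : mcar A m) : mcar A m := mk m (fun i j => badd (mv X i j) (mv Y i j)).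

Definition mzero {A : BanachAlgebra} {m} : mcar A m := mk m (fun _ _ => bzero).

Definition mone {A : BanachAlgebra} {m} : mcar A m := mk m (fun i j => if Nat.eqb i j then bone else bzero).

Definition mopp {A : BanachAlgebra} {m} (X : mcar A m) : mcar A m := mk m (fun i j => bopp (mv X i j)).

Definition mscal {A : BanachAlgebra} {m} (a : R) (X : mcar A m) : mcar A m := mk m (fun i j => bscal a (mv X i j)).

Definition mmul {A : BanachAlgebra} {m} (X Y : mcar A m) : mcar A m :=
  mk m (fun i j => asum (fun k => bmul (mv X i k) (mv Y k j)) m).
Definition mnorm {A : BanachAlgebra} {m} (X : mcar A m) : R :=
  Rsum (fun i => Rsum (fun j => bnorm (mv X i j)) m) m.

Ltac mauto := apply meq; intros ?i ?j ?Hi ?Hj; unfold madd, mzero, mone, mopp, mscal, mmul; repeat rewrite mv_mk by auto.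

Lemma madd_assoc {A : BanachAlgebra} m (x y z : mcar A m) : madd x (madd y z) = madd (madd x y) z.
Proof. mauto. apply badd_assoc. Qed.

Lemma madd_comm {A : BanachAlgebra} m (x y : mcar A m) : madd x y = madd y x.
Proof. mauto. apply badd_comm. Qed.

Lemma madd_0 {A : BanachAlgebra} m (x : mcar A m) : madd x mzero = x.
Proof. mauto. apply badd_0. Qed.

Lemma madd_opp {A : BanachAlgebra} m (x : mcar A m) : madd x (mopp x) = mzero.
Proof. mauto. apply badd_opp. Qed.

Lemma mscal_1 {A : BanachAlgebra} m (x : mcar A m) : mscal 1 x = x.
Proof. mauto. apply bscal_1. Qed.

Lemma mscal_assoc {A : BanachAlgebra} m a b (x : mcar A m) : mscal a (mscal b x) = mscal (a * b) x.
Proof. mauto. apply bscal_assoc. Qed.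

Lemma mscal_distr_l {A : BanachAlgebra} m a b (x : mcar A m) : mscal (a + b) x = madd (mscal a x) (mscal b x).
Proof. mauto. apply bscal_distr_l. Qed.

Lemma mscal_distr_r {A : BanachAlgebra} m a (x y : mcar A m) : mscal a (madd x y) = madd (mscal a x) (mscal a y).
Proof. mauto. apply bscal_distr_r. Qed.

Lemma mmul_assoc {A : BanachAlgebra} m (x y z : mcar A m) : mmul x (mmul y z) = mmul (mmul x y) z.
Proof.
  mauto.
  rewrite (asum_ext _ (fun k => asum (fun l => bmul (mv x i k) (bmul (mv y k l) (mv z l j))) m)).
  2:{ intros k Hk. rewrite mv_mk by auto. apply asum_mul_l. }
  rewrite (asum_ext (fun k => bmul (mv (mk m _) i k) (mv z k j))
             (fun l => asum (fun k => bmul (mv x i k) (bmul (mv y k l) (mv z l j))) m)).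
  2:{ intros l Hl. rewrite mv_mk by auto. rewrite asum_mul_r. apply asum_ext. intros. symmetry. apply bmul_assoc. }
  apply asum_swap.
Qed.

Lemma mmul_1_l {A : BanachAlgebra} m (x : mcar A m) : mmul mone x = x.
Proof.
  mauto. rewrite (asum_single _ i).
  - replace (Nat.ltb i m) with true by (symmetry; apply Nat.ltb_lt; auto).
    rewrite mv_mk, Nat.eqb_refl by auto. apply bmul_1_l.
  - intros k Hk. destruct (Nat.lt_ge_cases k m).
    + rewrite mv_mk by auto. replace (Nat.eqb i k) with false by (symmetry; apply Nat.eqb_neq; auto).
      apply bmul_0_l.
    + rewrite (mv_out m _ i k) by lia. apply bmul_0_l.
Qed.

Lemma mmul_1_r {A : BanachAlgebra} m (x : mcar A m) : mmul x mone = x.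
Proof.
  mauto. rewrite (asum_single _ j).
  - replace (Nat.ltb j m) with true by (symmetry; apply Nat.ltb_lt; auto).
    rewrite mv_mk, Nat.eqb_refl by auto. apply bmul_1_r.
  - intros k Hk. destruct (Nat.lt_ge_cases k m).
    + rewrite mv_mk by auto. replace (Nat.eqb k j) with false by (symmetry; apply Nat.eqb_neq; auto).
      apply bmul_0_r.
    + rewrite (mv_out m _ k j) by lia. apply bmul_0_r.
Qed.

Lemma mmul_distr_l {A : BanachAlgebra} m (x y z : mcar A m) : mmul x (madd y z) = madd (mmul x y) (mmul x z).
Proof.
  mauto. rewrite <- asum_add. apply asum_ext. intros k Hk. rewrite mv_mk by auto. apply bmul_distr_l.
Qed.

Lemma mmul_distr_r {A : BanachAlgebra} m (x y z : mcar A m) : mmul (madd x y) z = madd (mmul x z) (mmul y z).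
Proof.
  mauto. rewrite <- asum_add. apply asum_ext. intros k Hk. rewrite mv_mk by auto. apply bmul_distr_r.
Qed.

Lemma mmul_scal_l {A : BanachAlgebra} m a (x y : mcar A m) : mmul (mscal a x) y = mscal a (mmul x y).
Proof.
  mauto. rewrite (asum_lin (fun v => bscal a v)) by (apply (proj1 (bbounded_scal a))).
  apply asum_ext. intros k Hk. rewrite mv_mk by auto. apply bmul_scal_l.
Qed.

Lemma mmul_scal_r {A : BanachAlgebra} m a (x y : mcar A m) : mmul x (mscal a y) = mscal a (mmul x y).
Proof.
  mauto. rewrite (asum_lin (fun v => bscal a v)) by (apply (proj1 (bbounded_scal a))).
  apply asum_ext. intros k Hk. rewrite mv_mk by auto. apply bmul_scal_r.
Qed.

Lemma mnorm_pos {A : BanachAlgebra} m (x : mcar A m) : 0 <= mnorm x.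
Proof. apply Rsum_nonneg. intros. apply Rsum_nonneg. intros. apply bnorm_pos. Qed.

Lemma entry_le_mnorm {A : BanachAlgebra} m (x : mcar A m) i j : bnorm (mv x i j) <= mnorm x.
Proof.
  destruct (classic ((i < m)%nat /\ (j < m)%nat)) as [[Hi Hj]|H].
  - unfold mnorm. eapply Rle_trans; [|apply (Rsum_term_le _ i); auto].
    + apply (Rsum_term_le (fun j => bnorm (mv x i j))); auto. intros; apply bnorm_pos.
    + intros. apply Rsum_nonneg. intros; apply bnorm_pos.
  - rewrite mv_out, bnorm_0 by auto. apply mnorm_pos.
Qed.

Lemma mnorm_eq0 {A : BanachAlgebra} m (x : mcar A m) : mnorm x = 0 -> x = mzero.
Proof.
  intro H. apply meq. intros i j Hi Hj. unfold mzero. rewrite mv_mk by auto.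
  apply bnorm_eq0. pose proof (entry_le_mnorm m x i j). pose proof (bnorm_pos (mv x i j)). lra.
Qed.

Lemma mnorm_triang {A : BanachAlgebra} m (x y : mcar A m) : mnorm (madd x y) <= mnorm x + mnorm y.
Proof.
  unfold mnorm. rewrite <- Rsum_add. apply Rsum_le. intros i Hi. rewrite <- Rsum_add. apply Rsum_le.
  intros j Hj. unfold madd. rewrite mv_mk by auto. apply bnorm_triang.
Qed.

Lemma mnorm_scal {A : BanachAlgebra} m a (x : mcar A m) : mnorm (mscal a x) = Rabs a * mnorm x.
Proof.
  unfold mnorm. rewrite <- Rsum_scal. apply Rsum_ext. intros i Hi. rewrite <- Rsum_scal. apply Rsum_ext.
  intros j Hj. unfold mscal. rewrite mv_mk by auto. apply bnorm_scal.
Qed.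

Lemma mnorm_mul {A : BanachAlgebra} m (x y : mcar A m) : mnorm (mmul x y) <= mnorm x * mnorm y.
Proof.
  unfold mnorm at 1. unfold mmul.
  apply Rle_trans with (Rsum (fun i => Rsum (fun k => bnorm (mv x i k) * mnorm y) m) m).
  - apply Rsum_le. intros i Hi.
    apply Rle_trans with (Rsum (fun j => Rsum (fun k => bnorm (mv x i k) * bnorm (mv y k j)) m) m).
    + apply Rsum_le. intros j Hj. rewrite mv_mk by auto. eapply Rle_trans; [apply asum_norm|].
      apply Rsum_le. intros. apply bnorm_mul.
    + rewrite Rsum_swap. apply Rsum_le. intros k Hk. rewrite Rsum_scal.
      apply Rmult_le_compat_l; [apply bnorm_pos|]. unfold mnorm.
      apply (Rsum_term_le (fun i => Rsum (fun j => bnorm (mv y i j)) m)); auto.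
      intros. apply Rsum_nonneg. intros; apply bnorm_pos.
  - fold (mnorm y). unfold mnorm at 2. rewrite Rsum_scal_r. apply Req_le.
    apply Rsum_ext. intros i Hi. rewrite Rsum_scal_r. reflexivity.
Qed.

Lemma mv_sub {A : BanachAlgebra} m (x y : mcar A m) i j :
  mv (madd x (mopp y)) i j = bsub (mv x i j) (mv y i j).
Proof.
  destruct (classic ((i < m)%nat /\ (j < m)%nat)) as [[Hi Hj]|H].
  - unfold madd, mopp. rewrite !mv_mk by auto. reflexivity.
  - rewrite !mv_out by auto. symmetry. apply bsub_self.
Qed.

(* Completeness: a Cauchy sequence of matrices converges entrywise, and uniformly
   over the finitely many entries. *)
Lemma mcomplete {A : BanachAlgebra} m (u : nat -> mcar A m) :
  (forall eps, eps > 0 -> exists N, forall p q, (N <= p)%nat -> (N <= q)%nat ->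
        mnorm (madd (u p) (mopp (u q))) < eps) ->
  exists l, forall eps, eps > 0 -> exists N, forall p, (N <= p)%nat ->
        mnorm (madd (u p) (mopp l)) < eps.
Proof.
  intro Hc.
  assert (He : forall ij : nat * nat, exists l : A, forall eps, eps > 0 -> exists N, forall p, (N <= p)%nat ->
        bnorm (badd (mv (u p) (fst ij) (snd ij)) (bopp l)) < eps).
  { intros [i j]. apply bcomplete. intros e Hep. destruct (Hc e Hep) as [N HN]. exists N.
    intros p q Hp Hq. simpl. eapply Rle_lt_trans; [|apply (HN p q Hp Hq)].
    change (bnorm (bsub (mv (u p) i j) (mv (u q) i j)) <= mnorm (madd (u p) (mopp (u q)))). rewrite <- mv_sub. apply entry_le_mnorm. }
  destruct (choice _ He) as [L HL].
  exists (mk m (fun i j => L (i, j))). intros e Hep.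
  set (e' := e / (INR m * INR m + 1)).
  assert (He' : e' > 0). { unfold e'. apply Rdiv_lt_0_compat; auto. pose proof (pos_INR m). nra. }
  destruct (finite_N2 (fun i j N => forall p, (N <= p)%nat -> bnorm (bsub (mv (u p) i j) (L (i, j))) < e') m)
    as [N HN].
  - intros i j N N' HNN H p Hp. apply H. lia.
  - intros i j Hi Hj. destruct (HL (i, j) e' He') as [N HN]. exists N. exact HN.
  - exists N. intros p Hp. unfold mnorm.
    apply Rle_lt_trans with (Rsum (fun _ => Rsum (fun _ => e') m) m).
    + apply Rsum_le. intros i Hi. apply Rsum_le. intros j Hj. rewrite mv_sub. rewrite mv_mk by auto.
      left. apply HN; auto.
    + rewrite !Rsum_const. unfold e'. pose proof (pos_INR m).
      apply (Rmult_lt_reg_r (INR m * INR m + 1)); [nra|]. field_simplify; nra.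
Qed.

Definition MatAlg (A : BanachAlgebra) (m : nat) : BanachAlgebra := {|
  carrier := mcar A m; bzero := mzero; bone := mone; badd := madd; bopp := mopp; bmul := mmul;
  bscal := mscal; bnorm := mnorm;
  badd_assoc := madd_assoc m; badd_comm := madd_comm m; badd_0 := madd_0 m; badd_opp := madd_opp m;
  bscal_1 := mscal_1 m; bscal_assoc := mscal_assoc m; bscal_distr_l := mscal_distr_l m;
  bscal_distr_r := mscal_distr_r m; bmul_assoc := mmul_assoc m; bmul_1_l := mmul_1_l m;
  bmul_1_r := mmul_1_r m; bmul_distr_l := mmul_distr_l m; bmul_distr_r := mmul_distr_r m;
  bmul_scal_l := mmul_scal_l m; bmul_scal_r := mmul_scal_r m;
  bnorm_pos := mnorm_pos m; bnorm_eq0 := mnorm_eq0 m; bnorm_triang := mnorm_triang m;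
  bnorm_scal := mnorm_scal m; bnorm_mul := mnorm_mul m; bcomplete := mcomplete m |}.

Lemma mv_madd {A : BanachAlgebra} m (x y : mcar A m) i j : mv (madd x y) i j = badd (mv x i j) (mv y i j).
Proof.
  destruct (classic ((i < m)%nat /\ (j < m)%nat)) as [[Hi Hj]|H].
  - unfold madd. rewrite mv_mk by auto. reflexivity.
  - rewrite !mv_out by auto. symmetry. apply badd_0.
Qed.

Lemma mv_mscal {A : BanachAlgebra} m a (x : mcar A m) i j : mv (mscal a x) i j = bscal a (mv x i j).
Proof.
  destruct (classic ((i < m)%nat /\ (j < m)%nat)) as [[Hi Hj]|H].
  - unfold mscal. rewrite mv_mk by auto. reflexivity.
  - rewrite !mv_out by auto. symmetry. apply bscal_0_r.
Qed.

Lemma mv_badd {A : BanachAlgebra} m (x y : MatAlg A m) i j : mv (badd x y) i j = badd (mv x i j) (mv y i j).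
Proof. apply mv_madd. Qed.

Lemma mv_bscal {A : BanachAlgebra} m a (x : MatAlg A m) i j : mv (bscal a x) i j = bscal a (mv x i j).
Proof. apply mv_mscal. Qed.

Definition ent {A : BanachAlgebra} m i j (X : MatAlg A m) : A := mv X i j.

Lemma ent_bounded {A : BanachAlgebra} m i j : bbounded (ent (A:=A) m i j).
Proof.
  split; [split|].
  - intros. apply mv_madd.
  - intros. apply mv_mscal.
  - exists 1. split; [lra|]. intros. rewrite Rmult_1_l. apply entry_le_mnorm.
Qed.

Definition emb {A : BanachAlgebra} m i j (a : A) : MatAlg A m :=
  mk m (fun k l => if andb (Nat.eqb k i) (Nat.eqb l j) then a else bzero).

Lemma emb_bounded {A : BanachAlgebra} m i j : bbounded (emb (A:=A) m i j).
Proof.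
  split; [split|].
  - intros x y. apply meq. intros k l Hk Hl. rewrite mv_badd. unfold emb. rewrite !mv_mk by auto.
    destruct (andb _ _); auto. symmetry; apply badd_0.
  - intros a x. apply meq. intros k l Hk Hl. rewrite mv_bscal. unfold emb. rewrite !mv_mk by auto.
    destruct (andb _ _); auto. symmetry; apply bscal_0_r.
  - exists 1. split; [lra|]. intro x. simpl. unfold mnorm, emb.
    apply Rle_trans with (Rsum (fun k => if Nat.eqb k i then Rsum (fun l => if Nat.eqb l j then bnorm x else 0) m else 0) m).
    + apply Rsum_le. intros k Hk. destruct (Nat.eqb k i) eqn:E1.
      * apply Rsum_le. intros l Hl. rewrite mv_mk by auto. rewrite E1. simpl.
        destruct (Nat.eqb l j); [lra|rewrite bnorm_0; lra].
      * apply Req_le. rewrite <- (Rsum_zero m). apply Rsum_ext. intros l Hl. rewrite mv_mk by auto.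
        rewrite E1. simpl. apply bnorm_0.
    + rewrite (Rsum_single _ i).
      * rewrite Nat.eqb_refl. rewrite (Rsum_single _ j).
        -- rewrite Nat.eqb_refl. pose proof (bnorm_pos x).
           destruct (Nat.ltb j m); destruct (Nat.ltb i m); lra.
        -- intros l Hl. apply Nat.eqb_neq in Hl. rewrite Hl. reflexivity.
      * intros k Hk. apply Nat.eqb_neq in Hk. rewrite Hk. reflexivity.
Qed.

Lemma mv_asum {A : BanachAlgebra} m (f : nat -> MatAlg A m) K i j :
  mv (asum f K) i j = asum (fun k => mv (f k) i j) K.
Proof. apply (asum_lin (ent m i j)). apply ent_bounded. Qed.

Lemma mat_decomp {A : BanachAlgebra} m (F : nat -> nat -> A) :
  (mk m F : MatAlg A m) = asum (fun i => asum (fun j => emb m i j (F i j)) m) m.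
Proof.
  apply meq. intros i j Hi Hj. rewrite mv_mk by auto. rewrite mv_asum.
  rewrite (asum_single _ i).
  - replace (Nat.ltb i m) with true by (symmetry; apply Nat.ltb_lt; auto).
    rewrite mv_asum. rewrite (asum_single _ j).
    + replace (Nat.ltb j m) with true by (symmetry; apply Nat.ltb_lt; auto).
      unfold emb. rewrite mv_mk, !Nat.eqb_refl by auto. reflexivity.
    + intros l Hl. unfold emb. rewrite mv_mk by auto. rewrite Nat.eqb_refl.
      apply Nat.eqb_neq in Hl. rewrite Nat.eqb_sym, Hl. reflexivity.
  - intros k Hk. rewrite mv_asum. rewrite <- (asum_zero m). apply asum_ext. intros l Hl.
    unfold emb. rewrite mv_mk by auto. apply Nat.eqb_neq in Hk. rewrite Nat.eqb_sym, Hk. reflexivity.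
Qed.

Lemma C2_of_entries {A : BanachAlgebra} n m (F : nat -> nat -> (nat -> R) -> A) :
  (forall i j, (i < m)%nat -> (j < m)%nat -> C2 n (F i j)) ->
  C2 n (fun t => (mk m (fun i j => F i j t) : MatAlg A m)).
Proof.
  intro H. eapply C2_ext; [intros t _; symmetry; apply mat_decomp|].
  apply (C2_asum n (fun i t => asum (fun j => emb m i j (F i j t)) m)). intros i Hi.
  apply (C2_asum n (fun j t => emb m i j (F i j t))). intros j Hj.
  apply C2_lin; [apply emb_bounded|]. auto.
Qed.

Lemma C2_entries {A : BanachAlgebra} n m (S : (nat -> R) -> MatAlg A m) i j :
  C2 n S -> C2 n (fun t => mv (S t) i j).
Proof. intro H. apply (C2_lin n (ent m i j)); auto. apply ent_bounded. Qed.

Lemma mv_mmul {A : BanachAlgebra} m (x y : MatAlg A m) i j : (i < m)%nat -> (j < m)%nat ->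
  mv (bmul x y) i j = asum (fun k => bmul (mv x i k) (mv y k j)) m.
Proof. intros Hi Hj. exact (mv_mk m _ i j Hi Hj). Qed.

Lemma mv_mone {A : BanachAlgebra} m i j : (i < m)%nat -> (j < m)%nat ->
  mv (bone : MatAlg A m) i j = if Nat.eqb i j then bone else bzero.
Proof. intros Hi Hj. exact (mv_mk m _ i j Hi Hj). Qed.

Definition mmap {A B : BanachAlgebra} m (f : A -> B) (X : MatAlg A m) : MatAlg B m :=
  mk m (fun i j => f (mv X i j)).

Lemma mmap_bounded {A B : BanachAlgebra} m (f : A -> B) : bbounded f -> bbounded (mmap m f).
Proof.
  intros [Hl [C [HC Hb]]]. split; [split|].
  - intros x y. apply meq. intros i j Hi Hj. rewrite mv_badd. unfold mmap. rewrite !mv_mk by auto.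
    rewrite mv_badd. apply (proj1 Hl).
  - intros a x. apply meq. intros i j Hi Hj. rewrite mv_bscal. unfold mmap. rewrite !mv_mk by auto.
    rewrite mv_bscal. apply (proj2 Hl).
  - exists C. split; auto. intro x. simpl. unfold mnorm, mmap. rewrite <- Rsum_scal. apply Rsum_le.
    intros i Hi. rewrite <- Rsum_scal. apply Rsum_le. intros j Hj. rewrite mv_mk by auto. apply Hb.
Qed.

Lemma mmap_hom {A B : BanachAlgebra} m (f : A -> B) : unital_alg_hom f ->
  (forall x y : MatAlg A m, mmap m f (bmul x y) = bmul (mmap m f x) (mmap m f y)) /\
  (forall x y : MatAlg A m, mmap m f (badd x y) = badd (mmap m f x) (mmap m f y)) /\
  mmap m f bone = bone.
Proof.
  intros [Hl [Hm H1]]. split; [|split].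
  - intros x y. apply meq. intros i j Hi Hj. rewrite (mv_mmul m _ _ i j) by auto. unfold mmap at 1.
    rewrite mv_mk by auto. rewrite mv_mmul by auto.
    rewrite (asum_lin f) by auto. apply asum_ext. intros k Hk. unfold mmap. rewrite !mv_mk by auto. apply Hm.
  - intros x y. apply meq. intros i j Hi Hj. rewrite mv_badd. unfold mmap. rewrite !mv_mk by auto.
    rewrite mv_badd. apply (proj1 Hl).
  - apply meq. intros i j Hi Hj. rewrite (mv_mone m i j) by auto. unfold mmap. rewrite mv_mk by auto.
    rewrite mv_mone by auto. destruct (Nat.eqb i j); auto. apply blinear_0; auto.
Qed.

Lemma mmap_sec {A B : BanachAlgebra} m (f : A -> B) (g : B -> A) : (forall b, f (g b) = b) ->
  forall x : MatAlg B m, mmap m f (mmap m g x) = x.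
Proof.
  intros H x. apply meq. intros i j Hi Hj. unfold mmap. rewrite !mv_mk by auto. apply H.
Qed.

Definition C2_unit {X : BanachAlgebra} n (f : (nat -> R) -> X) : Prop :=
  C2 n f /\ exists w, C2 n w /\
    forall t, in_simplex n t -> bmul (f t) (w t) = bone /\ bmul (w t) (f t) = bone.

Lemma C2_unit_mul {X : BanachAlgebra} n (f g : (nat -> R) -> X) :
  C2_unit n f -> C2_unit n g -> C2_unit n (fun t => bmul (f t) (g t)).
Proof.
  intros [Hf [wf [Hwf Hfi]]] [Hg [wg [Hwg Hgi]]]. split; [apply C2_mul; auto|].
  exists (fun t => bmul (wg t) (wf t)). split; [apply C2_mul; auto|].
  intros t Ht. destruct (Hfi t Ht) as [H1 H2], (Hgi t Ht) as [H3 H4]. split.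
  - rewrite <- bmul_assoc, (bmul_assoc (g t)), H3, bmul_1_l. exact H1.
  - rewrite <- bmul_assoc, (bmul_assoc (wf t)), H2, bmul_1_l. exact H4.
Qed.

(* A C^2 function whose values stay within 1/2 of the unit is a unit of C^2(Delta^n, X):
   invert pointwise by the Neumann series, then use the uniform bound on the inverse. *)
Lemma C2_unit_near_one {X : BanachAlgebra} n (f : (nat -> R) -> X) :
  C2 n f -> (forall t, in_simplex n t -> bnorm (bsub bone (f t)) <= 1/2) -> C2_unit n f.
Proof.
  intros Hf Hnear.
  assert (Hinv : forall t, exists w : X, in_simplex n t ->
    bmul (f t) w = bone /\ bmul w (f t) = bone /\ bnorm w <= bnorm (@bone X) + 1).
  { intro t. destruct (classic (in_simplex n t)) as [Ht|Ht].
    - destruct (neumann_inverse (f t) (Hnear t Ht)) as [w Hw]. exists w. auto.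
    - exists bone. tauto. }
  destruct (choice _ Hinv) as [w Hw].
  split; auto. exists w. split.
  - apply (C2_inv n f w (bnorm (@bone X) + 1)); auto; intros t Ht; apply Hw in Ht; tauto.
  - intros t Ht. destruct (Hw t Ht) as [H1 [H2 _]]. auto.
Qed.

(* Ordered product x_(K-1) * ... * x_1 * x_0. *)
Fixpoint prodl {X : BanachAlgebra} (x : nat -> X) (K : nat) : X :=
  match K with O => bone | S K' => bmul (x K') (prodl x K') end.

Lemma prodl_one {X : BanachAlgebra} (x : nat -> X) K :
  (forall k, (k < K)%nat -> x k = bone) -> prodl x K = bone.
Proof.
  induction K as [|K IHK]; intro H; simpl; auto.
  rewrite IHK by (intros; apply H; lia). rewrite (H K) by lia. apply bmul_1_l.
Qed.

Lemma prodl_hom {X Y : BanachAlgebra} (f : X -> Y) (x : nat -> X) K :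
  (forall a b, f (bmul a b) = bmul (f a) (f b)) -> f bone = bone ->
  f (prodl x K) = prodl (fun k => f (x k)) K.
Proof.
  intros Hmul Hone. induction K as [|K IHK]; simpl; auto. rewrite Hmul, IHK. reflexivity.
Qed.

Lemma prodl_telescope {X : BanachAlgebra} (P Q : nat -> X) K :
  (forall k, (k < K)%nat -> bmul (Q k) (P k) = bone) ->
  bmul (prodl (fun k => bmul (P (S k)) (Q k)) K) (P O) = P K.
Proof.
  induction K as [|K IHK]; intro H; simpl; [apply bmul_1_l|].
  rewrite <- bmul_assoc, IHK by (intros; apply H; lia).
  rewrite <- bmul_assoc, H, bmul_1_r by lia. reflexivity.
Qed.

Lemma C2_unit_prodl {X : BanachAlgebra} n (f : nat -> (nat -> R) -> X) K :
  (forall k, (k < K)%nat -> C2_unit n (f k)) -> C2_unit n (fun t => prodl (fun k => f k t) K).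
Proof.
  induction K as [|K IHK]; intro H; simpl.
  - split; [apply C2_const|]. exists (fun _ => bone). split; [apply C2_const|].
    intros. rewrite bmul_1_l. auto.
  - apply (C2_unit_mul n (f K)); [apply H; lia|apply IHK; intros; apply H; lia].
Qed.

(** * Lifting units along a homomorphism with a bounded section *)

Section Lifting.

Variables (A B : BanachAlgebra) (phi : A -> B) (s : B -> A).
Hypothesis phi_add : forall x y, phi (badd x y) = badd (phi x) (phi y).
Hypothesis phi_mul : forall x y, phi (bmul x y) = bmul (phi x) (phi y).
Hypothesis phi_one : phi bone = bone.
Hypothesis s_bounded : bbounded s.
Hypothesis s_section : forall b, phi (s b) = b.
Variable n : nat.

(* The affine lift b |-> 1 + s(b - 1): a preimage of b that is close to 1 when b is. *)
Definition lift_near_one (b : B) : A := badd bone (s (bsub b bone)).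

Lemma phi_lift_near_one (b : B) : phi (lift_near_one b) = b.
Proof.
  unfold lift_near_one. rewrite phi_add, phi_one, s_section, badd_comm. apply bsub_add_cancel.
Qed.

Lemma lift_near_one_1 : lift_near_one bone = bone.
Proof.
  unfold lift_near_one. rewrite bsub_self, (blinear_0 s (proj1 s_bounded)). apply badd_0.
Qed.

Lemma lift_near_one_dist (b : B) : bnorm (bsub bone (lift_near_one b)) = bnorm (s (bsub b bone)).
Proof.
  unfold lift_near_one. rewrite bnorm_sub_sym, badd_comm. unfold bsub at 1.
  rewrite <- badd_assoc, badd_opp, badd_0. reflexivity.
Qed.

Lemma lift_near_one_C2 (g : (nat -> R) -> B) : C2 n g -> C2 n (fun t => lift_near_one (g t)).
Proof.
  intro Hg. unfold lift_near_one. apply C2_add; [apply C2_const|].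
  apply C2_lin; auto. unfold bsub. apply C2_add; [auto|apply C2_const].
Qed.

Lemma step_near_one (T' T V : B) eps M :
  bmul T V = bone -> bnorm (bsub T' T) <= eps -> bnorm V <= M ->
  bnorm (bsub (bmul T' V) bone) <= eps * M.
Proof.
  intros HTV Hd HV. rewrite <- HTV, <- bmul_sub_l.
  eapply Rle_trans; [apply bnorm_mul|].
  apply Rmult_le_compat; auto; apply bnorm_pos.
Qed.

(* Write T(t) as the telescoping product of the factors
   g_k(t) = T((k+1)/N t) T(k/N t)^-1, k < N; for N large every factor is so close to 1 that its
   lift 1 + s(g_k - 1) is a unit of C^2(Delta^n, A), and the product of the lifts lifts T. *)
Theorem lift_C2_unit (T : (nat -> R) -> B) : C2_unit n T -> T origin = bone ->
  exists S, C2_unit n S /\ S origin = bone /\ forall t, in_simplex n t -> phi (S t) = T t.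
Proof.
  intros [HT [V [HV HTV]]] HT0.
  assert (HV0 : V origin = bone).
  { destruct (HTV origin (in_simplex_origin n)) as [_ H]. rewrite HT0, bmul_1_r in H. exact H. }
  destruct s_bounded as [Hs_lin [C [HC HCb]]].
  destruct (cont_bounded n V (C2_cont n V HV)) as [M [HM HMb]].
  set (eps := / (2 * (C * M))).
  assert (Heps : eps > 0) by (unfold eps; apply Rinv_0_lt_compat; nra).
  destruct (ray_steps n T (C2_cont n T HT) eps Heps) as [N [HN Hstep]].
  set (P := fun k t => T (sc (INR k / INR N) t)).
  set (Q := fun k t => V (sc (INR k / INR N) t)).
  assert (HPQ : forall k t, (k <= N)%nat -> in_simplex n t ->
    bmul (P k t) (Q k t) = bone /\ bmul (Q k t) (P k t) = bone).
  { intros k t Hk Ht. apply HTV, in_simplex_sc; [apply ratio_unit|]; auto. }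
  set (g := fun k t => bmul (P (S k) t) (Q k t)).
  exists (fun t => prodl (fun k => lift_near_one (g k t)) N). split; [|split].
  - apply C2_unit_prodl. intros k Hk. apply C2_unit_near_one.
    + apply lift_near_one_C2. unfold g, P, Q.
      apply C2_mul; apply C2_sc; auto; apply ratio_unit; lia.
    + intros t Ht. rewrite lift_near_one_dist. eapply Rle_trans; [apply HCb|].
      assert (Hg : bnorm (bsub (g k t) bone) <= eps * M).
      { apply (step_near_one _ (P k t)); [apply HPQ; auto; lia| |].
        - left. apply Hstep; auto.
        - apply HMb, in_simplex_sc; [apply ratio_unit; lia|auto]. }
      replace (1/2) with (C * (eps * M)) by (unfold eps; field; lra).
      apply Rmult_le_compat_l; lra.
  - apply prodl_one. intros k _. unfold g, P, Q.
    rewrite !sc_origin, HT0, HV0, bmul_1_l. apply lift_near_one_1.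
  - intros t Ht. rewrite (prodl_hom phi) by auto.
    replace (fun k => phi (lift_near_one (g k t))) with (fun k => g k t)
      by (apply functional_extensionality; intro; symmetry; apply phi_lift_near_one).
    assert (HP0 : P O t = bone).
    { unfold P. change (INR O) with 0. rewrite Rdiv_0_l, sc_0. exact HT0. }
    assert (HPN : P N t = T t).
    { unfold P. rewrite Rdiv_diag, sc_1 by (apply not_0_INR; lia). reflexivity. }
    pose proof (prodl_telescope (fun k => P k t) (fun k => Q k t) N) as Htel.
    cbv beta in Htel. rewrite HP0, HPN, bmul_1_r in Htel.
    apply Htel. intros k Hk. apply HPQ; auto; lia.
Qed.

End Lifting.

Definition mfun {A : BanachAlgebra} (m : nat) (X : fmat A) (t : nat -> R) : MatAlg A m :=
  mk m (fun i j => X i j t).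

Lemma mv_mfun_mul {A : BanachAlgebra} m (X Y : fmat A) i j t : (i < m)%nat -> (j < m)%nat ->
  mv (bmul (mfun m X t) (mfun m Y t)) i j = mat_mul m X Y i j t.
Proof.
  intros Hi Hj. rewrite mv_mmul by auto. apply asum_ext. intros k Hk.
  unfold mfun. rewrite !mv_mk by auto. reflexivity.
Qed.

Lemma GL0_C2_unit {B : BanachAlgebra} n m (tau : fmat B) :
  in_GL0 B n m tau -> C2_unit n (mfun m tau) /\ mfun m tau origin = bone.
Proof.
  intros [HtauC [[Y [HYC [HTY HYT]]] Horig]]. split; [split|].
  - apply C2_of_entries. intros. apply C2_iff. auto.
  - exists (mfun m Y). split; [apply C2_of_entries; intros; apply C2_iff; auto|].
    intros t Ht. split; apply meq; intros i j Hi Hj;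
      rewrite mv_mfun_mul, mv_mone by auto; [apply HTY|apply HYT]; auto.
  - apply meq. intros i j Hi Hj. rewrite mv_mone by auto. unfold mfun. rewrite mv_mk by auto.
    apply Horig; auto.
Qed.

Lemma C2_unit_GL0 {A : BanachAlgebra} n m (S : (nat -> R) -> MatAlg A m) :
  C2_unit n S -> S origin = bone -> in_GL0 A n m (fun i j t => mv (S t) i j).
Proof.
  intros [HS [W [HW HSW]]] HS0. split; [|split].
  - intros. apply C2_iff, C2_entries. auto.
  - exists (fun i j t => mv (W t) i j). split; [intros; apply C2_iff, C2_entries; auto|].
    split; intros i j t Hi Hj Ht; unfold mat_mul, idmat;
      rewrite <- (mv_mone (A:=A) m i j), <- mv_mmul by auto; f_equal; apply HSW; auto.
  - intros i j Hi Hj. rewrite HS0, mv_mone by auto. reflexivity.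
Qed.

(* Theorem 5: phi(Delta) : GL(C^2_0(Delta^n, A)) -> GL(C^2_0(Delta^n, B)) is surjective; every
   tau in GL_m is already the image of some sigma in GL_m (no stabilisation is needed). *)
Theorem mainTheorem5 (A B : BanachAlgebra) (phi : A -> B) (s : B -> A)
  (Hphi : unital_alg_hom phi) (Hphic : bcontinuous phi)
  (Hs : blinear s) (Hsc : bcontinuous s) (Hsec : forall b, phi (s b) = b)
  (n : nat) (Hn : (1 <= n)%nat) :
  forall (m : nat) (tau : fmat B), in_GL0 B n m tau ->
    exists (k : nat) (sigma : fmat A),
      (m <= k)%nat /\ in_GL0 A n k sigma /\
      mat_eq n k (map_fmat phi sigma) (stab m tau).
Proof.
  intros m tau Htau.
  destruct (GL0_C2_unit n m tau Htau) as [HT HT0].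
  destruct (mmap_hom m phi Hphi) as [Hmul [Hadd Hone]].
  destruct (lift_C2_unit (MatAlg A m) (MatAlg B m) (mmap m phi) (mmap m s) Hadd Hmul Hone
              (mmap_bounded m s (cont_lin_bounded s Hs Hsc)) (mmap_sec m phi s Hsec) n
              (mfun m tau) HT HT0) as [S [HS [HS0 HliftS]]].
  exists m, (fun i j t => mv (S t) i j). split; [lia|split].
  - apply C2_unit_GL0; auto.
  - intros i j t Hi Hj Ht. unfold map_fmat, stab.
    replace (andb (Nat.ltb i m) (Nat.ltb j m)) with true
      by (symmetry; apply andb_true_intro; split; apply Nat.ltb_lt; auto).
    transitivity (mv (mmap m phi (S t)) i j); [unfold mmap; rewrite mv_mk by auto; reflexivity|].
    rewrite HliftS by auto. unfold mfun. rewrite mv_mk by auto. reflexivity.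
Qed.
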